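(* Let $r\ge1$, $f,g\in H^r(\mathbb T)$ and $\tau>0$. Then $$\|\Psi_1^\tau(f)-\Psi_1^\tau(g)\|_r\le(1+M\tau)\|f-g\|_r,$$ where $M$ depends on $r$ and $\|f\|_r+\|g\|_r$.
   Context: $\mathbb{T}=[-\pi,\pi]$ periodic; $\widehat f_k=\frac1{2\pi}\int_{\mathbb T}f(x)e^{-ikx}dx$; $H^s$ norm $\|f\|_s^2=\sum_k(1+k^2)^s|\widehat f_k|^2$, $\|f\|=\|f\|_0$; $\bar f$ the complex conjugate. Fourier multipliers: $\partial_x^{-m}$ ($m\ge1$) has symbol $(ik)^{-m}$ for $k\ne0$ and $0$ for $k=0$; $\partial_x^m$ has symbol $(ik)^m$; $e^{it\partial_x^2}$ has symbol $e^{-itk^2}$; $\langle\partial_x^2\rangle$ has symbol $\sqrt{k^2+k^4}$; $\langle\partial_x^2\rangle^{-1}$ has symbol $(k^2+k^4)^{-1/2}$ for $k\neq0$, $0$ for $k=0$; $e^{i\tau\langle\partial_x^2\rangle}$ has symbol $e^{i\tau\sqrt{k^2+k^4}}$. $B=\langle\partial_x^2\rangle^{-1}\partial_x^2$, $B^\tau f=Be^{i\tau\langle\partial_x^2\rangle}f$, $\psi_1(y)=\int_0^1e^{ys}ds$, and $\psi_1(2i\tau\partial_x^2)$ has symbol $\psi_1(-2i\tau k^2)$. Fixed real numbers $a,b$ and a time $t_n\ge0$ are given. Define for a function $f$: $L_1^\tau(f)=-\frac i2\partial_x^{-2}[(e^{2i\tau\partial_x^2}\partial_x^{-2}\bar f)(\partial_x^2\bar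 f)]+\frac i2\partial_x^{-2}[(\partial_x^2\bar f)(\partial_x^{-2}\bar f)]$; $L_2^\tau(f)=-\frac i2e^{i\tau\partial_x^2}\partial_x^{-3}[(e^{i\tau\partial_x^2}\partial_x\bar f)(e^{-i\tau\partial_x^2}\bar f)]+\frac i2\partial_x^{-3}[(\partial_x\bar f)\bar f]-\tau\partial_x^{-2}[(\partial_x^2\bar f)\bar f]$; $L_3^\tau(f)=-i\partial_x^{-4}(e^{2i\tau\partial_x^2}-1)(\partial_x\bar f)^2$; $L_4^\tau(f)=i\partial_x^{-2}e^{-i\tau\partial_x^2}(e^{i\tau\partial_x^2}\bar f)^2-i\partial_x^{-2}(\bar f)^2-2\tau\partial_x^{-2}(\partial_x\bar f)^2$; $I_1^\tau(f)=\frac i2[(\partial_x^{-1}f)^2-e^{i\tau\partial_x^2}(e^{-i\tau\partial_x^2}\partial_x^{-1}f)^2]$; $I_2^\tau(f)=-\frac i2e^{i\tau\partial_x^2}\partial_x^{-1}[(e^{-i\tau\partial_x^2}f)(e^{i\tau\partial_x^2}\partial_x^{-1}\bar f)]+\frac i2\partial_x^{-1}[f\,\partial_x^{-1}\bar f]+\tau\|f\|^2$; $\Psi_1^\tau(f)=e^{i\tau\langle\partial_x^2\rangle}f-\frac i4B^\tau[2L_1^\tau(f)+2L_2^\tau(f)+L_3^\tau(f)+L_4^\tau(f)+I_1^\tau(f)+2I_2^\tau(f)]-i\tau(at_n+b)B^\tau(f+\psi_1(2i\tau\partial_x^2)\bar f)$. *)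

From Stdlib Require Import Reals ZArith.
From Coquelicot Require Import Coquelicot.
Open Scope R_scope.

(* A (distribution-valued) function on T = [-pi,pi] periodic is represented by
   its Fourier coefficients  k |-> \hat f_k  (k : Z), with
   \hat f_k = 1/(2 pi) \int_T f(x) e^{-ikx} dx. *)
Definition Four := Z -> C.

Definition exZ (u : Z -> R) : Prop :=
  ex_series (fun n => u (Z.of_nat n)) /\ ex_series (fun n => u (- Z.of_nat (S n))%Z).
Definition sumZ (u : Z -> R) : R :=
  Series (fun n => u (Z.of_nat n)) + Series (fun n => u (- Z.of_nat (S n))%Z).
Definition sumZC (u : Z -> C) : C := (sumZ (fun k => fst (u k)), sumZ (fun k => snd (u k))).

Definition Hs_weight (s : R) (k : Z) : R := Rpower (1 + IZR k ^ 2) s.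
Definition inH (s : R) (f : Four) : Prop :=
  exZ (fun k => Hs_weight s k * Cmod (f k) ^ 2).
Definition normH (s : R) (f : Four) : R :=
  sqrt (sumZ (fun k => Hs_weight s k * Cmod (f k) ^ 2)).

Definition fadd (f g : Four) : Four := fun k => Cplus (f k) (g k).
Definition fsub (f g : Four) : Four := fun k => Cminus (f k) (g k).
Definition fscal (c : C) (f : Four) : Four := fun k => Cmult c (f k).

(* pointwise product of functions = convolution of Fourier coefficients *)
Definition fmul (f g : Four) : Four :=
  fun k => sumZC (fun j => Cmult (f j) (g (k - j)%Z)).
(* complex conjugate:  \hat{\bar f}_k = conj (\hat f_{-k}) *)
Definition fconj (f : Four) : Four := fun k => Cconj (f (- k)%Z).
Definition fconst (c : C) : Four := fun k => if Z.eqb k 0 then c else RtoC 0.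

Fixpoint cpow (z : C) (n : nat) : C :=
  match n with O => RtoC 1 | S m => Cmult z (cpow z m) end.
Definition expi (t : R) : C := (cos t, sin t).
(* d^m, symbol (ik)^m *)
Definition dpos (m : nat) (f : Four) : Four :=
  fun k => Cmult (cpow (Cmult Ci (RtoC (IZR k))) m) (f k).
(* d^{-m}, symbol (ik)^{-m} for k <> 0 and 0 for k = 0 *)
Definition dneg (m : nat) (f : Four) : Four :=
  fun k => if Z.eqb k 0 then RtoC 0 else Cdiv (f k) (cpow (Cmult Ci (RtoC (IZR k))) m).
(* e^{it d^2}, symbol e^{-itk^2} *)
Definition schr (t : R) (f : Four) : Four :=
  fun k => Cmult (expi (- t * IZR k ^ 2)) (f k).
Definition omega (k : Z) : R := sqrt (IZR k ^ 2 + IZR k ^ 4).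
Definition eomega (tau : R) (f : Four) : Four :=
  fun k => Cmult (expi (tau * omega k)) (f k).
(* B = <d^2>^{-1} d^2, symbol (k^2+k^4)^{-1/2} (-k^2) for k<>0, 0 for k=0 *)
Definition Bop (f : Four) : Four :=
  fun k => if Z.eqb k 0 then RtoC 0
           else Cmult (RtoC (- IZR k ^ 2 / omega k)) (f k).
Definition Btau (tau : R) (f : Four) : Four := Bop (eomega tau f).
(* psi_1(y) = \int_0^1 e^{ys} ds, evaluated at y = -2 i tau k^2:
   equals 1 if y = 0 and (e^y - 1)/y otherwise *)
Definition psi1_sym (tau : R) (k : Z) : C :=
  let y := Cmult Ci (RtoC (- 2 * tau * IZR k ^ 2)) in
  if Req_EM_T (- 2 * tau * IZR k ^ 2) 0 then RtoC 1
  else Cdiv (Cminus (expi (- 2 * tau * IZR k ^ 2)) (RtoC 1)) y.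
Definition psi1op (tau : R) (f : Four) : Four := fun k => Cmult (psi1_sym tau k) (f k).

Definition ihalf : C := Cmult Ci (RtoC (1/2)).

Definition L1 (tau : R) (f : Four) : Four :=
  let fb := fconj f in
  fadd (fscal (Copp ihalf) (dneg 2 (fmul (schr (2*tau) (dneg 2 fb)) (dpos 2 fb))))
       (fscal ihalf (dneg 2 (fmul (dpos 2 fb) (dneg 2 fb)))).

Definition L2 (tau : R) (f : Four) : Four :=
  let fb := fconj f in
  fsub
   (fadd (fscal (Copp ihalf)
            (schr tau (dneg 3 (fmul (schr tau (dpos 1 fb)) (schr (- tau) fb)))))
         (fscal ihalf (dneg 3 (fmul (dpos 1 fb) fb))))
   (fscal (RtoC tau) (dneg 2 (fmul (dpos 2 fb) fb))).

Definition L3 (tau : R) (f : Four) : Four :=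
  let fb := fconj f in
  let h := fmul (dpos 1 fb) (dpos 1 fb) in
  fscal (Copp Ci) (dneg 4 (fsub (schr (2*tau) h) h)).

Definition L4 (tau : R) (f : Four) : Four :=
  let fb := fconj f in
  fsub
   (fsub (fscal Ci (dneg 2 (schr (- tau) (fmul (schr tau fb) (schr tau fb)))))
         (fscal Ci (dneg 2 (fmul fb fb))))
   (fscal (RtoC (2 * tau)) (dneg 2 (fmul (dpos 1 fb) (dpos 1 fb)))).

Definition I1 (tau : R) (f : Four) : Four :=
  fscal ihalf
    (fsub (fmul (dneg 1 f) (dneg 1 f))
          (schr tau (fmul (schr (- tau) (dneg 1 f)) (schr (- tau) (dneg 1 f))))).

Definition I2 (tau : R) (f : Four) : Four :=
  let fb := fconj f in
  fadd
   (fadd (fscal (Copp ihalf)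
            (schr tau (dneg 1 (fmul (schr (- tau) f) (schr tau (dneg 1 fb))))))
         (fscal ihalf (dneg 1 (fmul f (dneg 1 fb)))))
   (fconst (RtoC (tau * normH 0 f ^ 2))).

Definition Psi1 (a b tn tau : R) (f : Four) : Four :=
  fsub
   (fsub (eomega tau f)
         (fscal (Cmult Ci (RtoC (1/4)))
            (Btau tau
               (fadd (fscal (RtoC 2) (L1 tau f))
               (fadd (fscal (RtoC 2) (L2 tau f))
               (fadd (L3 tau f)
               (fadd (L4 tau f)
               (fadd (I1 tau f)
                     (fscal (RtoC 2) (I2 tau f))))))))))
   (fscal (Cmult Ci (RtoC (tau * (a * tn + b))))
      (Btau tau (fadd f (psi1op tau (fconj f))))).

From Stdlib Require Import Reals ZArith Lra Lia Psatz.
From Coquelicot Require Import Coquelicot.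
Open Scope R_scope.

(* In Fourier variables, Psi1 f - Psi1 g is a unimodular multiplier applied to f - g, plus a
   term of size tau |a tn + b| |f - g|, plus B^tau (|B| <= 1) applied to the difference of the
   brackets.  Each of the six bracket terms is a bilinear form sum_j Phi(k,j) P_j Q_(k-j) in f or
   its conjugate, and |1 - e^(i theta)| <= |theta| gives |Phi(k,j)| <= C tau wt(k,j) with
   wt(k,j) = 1 + (j^2 + (k-j)^2)/k^2.  The weight inequality
     <k>^r wt(k,j) <= C (alpha(k-j) + alpha(j) + alpha(k)) <j>^r <k-j>^r,
   with alpha(m) = (1 + m^2)^(-1/2) square summable, and Cauchy-Schwarz show that
   sum_j wt(k,j) x_j y_(k-j) is bounded in H^r by C |x|_r |y|_r.  Writing the difference of the
   bilinear forms as a bilinear form in (f - g, f) and (g, f - g) gives the bound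
   C tau |f - g|_r (|f|_r + |g|_r). *)

(** * Sums over Z of nonnegative and absolutely summable sequences *)

Lemma sum_n_nonneg (a : nat -> R) N : (forall n, 0 <= a n) -> 0 <= sum_n a N.
Proof.
  intros Ha; induction N as [|N IH].
  - rewrite sum_O; auto.
  - rewrite sum_Sn; unfold plus; simpl; specialize (Ha (S N)); lra.
Qed.

Lemma sum_n_le_compat (a b : nat -> R) N : (forall n, a n <= b n) -> sum_n a N <= sum_n b N.
Proof.
  intros H; induction N as [|N IH].
  - rewrite !sum_O; auto.
  - rewrite !sum_Sn; unfold plus; simpl; specialize (H (S N)); lra.
Qed.

Lemma sum_n_incr_nonneg (a : nat -> R) N M :
  (forall n, 0 <= a n) -> (N <= M)%nat -> sum_n a N <= sum_n a M.
Proof.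
  intros Ha HNM; induction HNM as [|M _ IH]; [lra|].
  rewrite sum_Sn; unfold plus; simpl; specialize (Ha (S M)); lra.
Qed.

Lemma ex_series_bounded_nonneg (a : nat -> R) B :
  (forall n, 0 <= a n) -> (forall N, sum_n a N <= B) -> ex_series a /\ Series a <= B.
Proof.
  intros Ha HB.
  destruct (ex_finite_lim_seq_incr (sum_n a) B) as [l Hl]; auto.
  { intros N; apply (sum_n_incr_nonneg a N (S N)); auto. }
  assert (Hs : is_series a l) by exact Hl.
  split; [exists l; auto|].
  rewrite (is_series_unique _ _ Hs).
  assert (Hle : Rbar_le l B) by (apply (is_lim_seq_le (sum_n a) (fun _ => B)); auto; apply is_lim_seq_const).
  exact Hle.
Qed.

Lemma sum_n_le_Series (a : nat -> R) N :
  (forall n, 0 <= a n) -> ex_series a -> sum_n a N <= Series a.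
Proof.
  intros Ha [l Hl]. rewrite (is_series_unique _ _ Hl).
  assert (Hle : Rbar_le (sum_n a N) l).
  { apply (is_lim_seq_le_loc (fun _ => sum_n a N) (sum_n a)); auto.
    - exists N; intros n Hn; apply sum_n_incr_nonneg; auto.
    - apply is_lim_seq_const. }
  exact Hle.
Qed.

Fixpoint zsum (u : Z -> R) (a : Z) (n : nat) : R :=
  match n with O => 0 | S m => zsum u a m + u (a + Z.of_nat m)%Z end.

Lemma zsum_Sl u a n : zsum u a (S n) = u a + zsum u (a + 1) n.
Proof.
  induction n as [|n IH]; cbn [zsum] in *.
  - rewrite Z.add_0_r; ring.
  - rewrite IH. replace (a + 1 + Z.of_nat n)%Z with (a + Z.of_nat (S n))%Z by lia. ring.
Qed.

Lemma zsum_app u a n m : zsum u a (n + m) = zsum u a n + zsum u (a + Z.of_nat n) m.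
Proof.
  induction m as [|m IH]; simpl.
  - rewrite Nat.add_0_r; ring.
  - rewrite Nat.add_succ_r; simpl; rewrite IH.
    replace (a + Z.of_nat (n + m))%Z with (a + Z.of_nat n + Z.of_nat m)%Z by lia. ring.
Qed.

Lemma zsum_ext u v a n : (forall j, u j = v j) -> zsum u a n = zsum v a n.
Proof. intros H; induction n; simpl; auto. rewrite IHn, H; auto. Qed.

Lemma zsum_nonneg u a n : (forall j, 0 <= u j) -> 0 <= zsum u a n.
Proof. intros H; induction n; simpl; [lra|]. specialize (H (a + Z.of_nat n)%Z); lra. Qed.

Lemma zsum_le u v a n : (forall j, u j <= v j) -> zsum u a n <= zsum v a n.
Proof. intros H; induction n; simpl; [lra|]. specialize (H (a + Z.of_nat n)%Z); lra. Qed.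

Lemma zsum_plus u v a n : zsum (fun j => u j + v j) a n = zsum u a n + zsum v a n.
Proof. induction n; simpl; [ring|]. rewrite IHn; ring. Qed.

Lemma zsum_scal c u a n : zsum (fun j => c * u j) a n = c * zsum u a n.
Proof. induction n; simpl; [ring|]. rewrite IHn; ring. Qed.

Lemma zsum_const0 a n : zsum (fun _ => 0) a n = 0.
Proof. induction n; simpl; auto. rewrite IHn; ring. Qed.

Lemma zsum_subwindow u a n a' n' : (forall j, 0 <= u j) -> (a' <= a)%Z ->
  (a + Z.of_nat n <= a' + Z.of_nat n')%Z -> zsum u a n <= zsum u a' n'.
Proof.
  intros H H1 H2.
  set (p := Z.to_nat (a - a')). set (q := (n' - p - n)%nat).
  assert (Hn' : n' = (p + (n + q))%nat) by (unfold q, p; lia).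
  rewrite Hn', !zsum_app.
  replace (a' + Z.of_nat p)%Z with a by (unfold p; lia).
  pose proof (zsum_nonneg u a' p H). pose proof (zsum_nonneg u (a + Z.of_nat n) q H). lra.
Qed.

Lemma zsum_reflect u k a n :
  zsum (fun j => u (k - j)%Z) a n = zsum u (k - a - Z.of_nat n + 1)%Z n.
Proof.
  induction n as [|n IH]; [reflexivity|].
  change (zsum (fun j => u (k - j)%Z) a (S n))
    with (zsum (fun j => u (k - j)%Z) a n + u (k - (a + Z.of_nat n))%Z).
  rewrite IH, zsum_Sl.
  replace (k - a - Z.of_nat (S n) + 1 + 1)%Z with (k - a - Z.of_nat n + 1)%Z by lia.
  replace (k - a - Z.of_nat (S n) + 1)%Z with (k - (a + Z.of_nat n))%Z by lia. ring.
Qed.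

Lemma zsum_translate u j a n : zsum (fun k => u (k - j)%Z) a n = zsum u (a - j)%Z n.
Proof. induction n; simpl; auto. rewrite IHn. do 2 f_equal. lia. Qed.

Definition sympart (u : Z -> R) N := zsum u (- Z.of_nat (S N))%Z (2 * S N).

Lemma sympart_split (u : Z -> R) N :
  sympart u N = sum_n (fun n => u (Z.of_nat n)) N + sum_n (fun n => u (- Z.of_nat (S n))%Z) N.
Proof.
  assert (Hpos : forall N, sum_n (fun n => u (Z.of_nat n)) N = zsum u 0 (S N)).
  { induction N0 as [|N0 IH].
    - rewrite sum_O; simpl; ring.
    - rewrite sum_Sn, IH; reflexivity. }
  assert (Hneg : forall N, sum_n (fun n => u (- Z.of_nat (S n))%Z) N
                           = zsum u (- Z.of_nat (S N))%Z (S N)).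
  { induction N0 as [|N0 IH].
    - rewrite sum_O; simpl; ring.
    - rewrite sum_Sn, IH, (zsum_Sl u (- Z.of_nat (S (S N0)))%Z (S N0)).
      replace (- Z.of_nat (S (S N0)) + 1)%Z with (- Z.of_nat (S N0))%Z by lia.
      unfold plus; simpl; ring. }
  unfold sympart. rewrite Hpos, Hneg.
  replace (2 * S N)%nat with (S N + S N)%nat by lia. rewrite zsum_app.
  replace (- Z.of_nat (S N) + Z.of_nat (S N))%Z with 0%Z by lia. ring.
Qed.

Definition nneg (u : Z -> R) := forall j, 0 <= u j.

Lemma exZ_bounded_nonneg u B :
  nneg u -> (forall N, sympart u N <= B) -> exZ u /\ sumZ u <= B.
Proof.
  intros Hu HB.
  assert (Hp : forall n, 0 <= u (Z.of_nat n)) by (intros; apply Hu).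
  assert (Hn : forall n, 0 <= u (- Z.of_nat (S n))%Z) by (intros; apply Hu).
  assert (E1 : ex_series (fun n => u (Z.of_nat n))).
  { apply (ex_series_bounded_nonneg _ B Hp). intros N.
    pose proof (HB N) as H; rewrite sympart_split in H.
    pose proof (sum_n_nonneg _ N Hn); lra. }
  assert (E2 : ex_series (fun n => u (- Z.of_nat (S n))%Z)).
  { apply (ex_series_bounded_nonneg _ B Hn). intros N.
    pose proof (HB N) as H; rewrite sympart_split in H.
    pose proof (sum_n_nonneg _ N Hp); lra. }
  split; [split; auto|].
  assert (L : is_lim_seq (sympart u) (sumZ u)).
  { eapply is_lim_seq_ext; [intros n; symmetry; apply sympart_split|].
    apply is_lim_seq_plus'; apply Series_correct; auto. }
  assert (Hle : Rbar_le (sumZ u) B)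
    by (apply (is_lim_seq_le (sympart u) (fun _ => B)); auto; apply is_lim_seq_const).
  exact Hle.
Qed.

Lemma sympart_le_sumZ u N : nneg u -> exZ u -> sympart u N <= sumZ u.
Proof.
  intros Hu [E1 E2]. rewrite sympart_split. unfold sumZ.
  pose proof (sum_n_le_Series _ N (fun n => Hu _) E1).
  pose proof (sum_n_le_Series _ N (fun n => Hu _) E2). lra.
Qed.

Lemma zsum_le_sumZ u a n : nneg u -> exZ u -> zsum u a n <= sumZ u.
Proof.
  intros Hu E. eapply Rle_trans; [|apply (sympart_le_sumZ u (Z.to_nat (Z.abs a + Z.of_nat n)) Hu E)].
  apply zsum_subwindow; auto; lia.
Qed.

Lemma sumZ_nonneg u : nneg u -> exZ u -> 0 <= sumZ u.
Proof. intros Hu E. eapply Rle_trans; [apply (zsum_nonneg u 0 0 Hu)|apply zsum_le_sumZ; auto]. Qed.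

Lemma le_sumZ u m : nneg u -> exZ u -> u m <= sumZ u.
Proof.
  intros H E. pose proof (zsum_le_sumZ u m 1 H E) as Hm.
  simpl in Hm. rewrite Z.add_0_r in Hm. lra.
Qed.

Lemma sumZ_ext u v : (forall j, u j = v j) -> sumZ u = sumZ v.
Proof. intros H; unfold sumZ; f_equal; apply Series_ext; auto. Qed.

Lemma exZ_ext u v : (forall j, u j = v j) -> exZ u -> exZ v.
Proof.
  intros H [E1 E2]; split;
    [apply (ex_series_ext (fun n => u (Z.of_nat n)))|apply (ex_series_ext (fun n => u (- Z.of_nat (S n))%Z))]; auto.
Qed.

Lemma exZ_le u v : nneg u -> (forall j, u j <= v j) -> exZ v -> exZ u /\ sumZ u <= sumZ v.
Proof.
  intros Hu Huv E. apply exZ_bounded_nonneg; auto. intros N.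
  eapply Rle_trans; [apply zsum_le, Huv|].
  apply sympart_le_sumZ; auto. intros j; eapply Rle_trans; [apply Hu|apply Huv].
Qed.

Lemma sumZ_reflect_nonneg u k :
  nneg u -> exZ u -> exZ (fun j => u (k - j)%Z) /\ sumZ (fun j => u (k - j)%Z) = sumZ u.
Proof.
  assert (Hle : forall v, nneg v -> exZ v ->
            exZ (fun j => v (k - j)%Z) /\ sumZ (fun j => v (k - j)%Z) <= sumZ v).
  { intros v Hv E. apply exZ_bounded_nonneg; [intros j; apply Hv|].
    intros N. unfold sympart. rewrite zsum_reflect. apply zsum_le_sumZ; auto. }
  intros Hu E. destruct (Hle u Hu E) as [E' H']. split; auto.
  destruct (Hle (fun j => u (k - j)%Z) (fun j => Hu _) E') as [_ H''].
  rewrite (sumZ_ext _ u) in H''; [lra|]. intros; f_equal; lia.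
Qed.

Lemma exZ_plus u v : exZ u -> exZ v -> exZ (fun j => u j + v j).
Proof. intros [A1 A2] [B1 B2]; split; [apply (ex_series_plus _ _ A1 B1)|apply (ex_series_plus _ _ A2 B2)]. Qed.

Lemma sumZ_plus u v : exZ u -> exZ v -> sumZ (fun j => u j + v j) = sumZ u + sumZ v.
Proof.
  intros [A1 A2] [B1 B2]; unfold sumZ.
  rewrite (Series_plus _ _ A1 B1), (Series_plus _ _ A2 B2). ring.
Qed.

Lemma exZ_scal c u : exZ u -> exZ (fun j => c * u j).
Proof. intros [A1 A2]; split; [apply (ex_series_scal_l c _ A1)|apply (ex_series_scal_l c _ A2)]. Qed.

Lemma sumZ_scal c u : sumZ (fun j => c * u j) = c * sumZ u.
Proof. unfold sumZ. rewrite !Series_scal_l. ring. Qed.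

Lemma sumZ_minus u v : exZ u -> exZ v -> sumZ (fun j => u j - v j) = sumZ u - sumZ v.
Proof.
  intros A B. rewrite (sumZ_ext _ (fun j => u j + (-1) * v j)) by (intros; ring).
  rewrite sumZ_plus, sumZ_scal by (try apply exZ_scal; auto). ring.
Qed.

Lemma exZ_0 : exZ (fun _ => 0).
Proof. apply (exZ_bounded_nonneg _ 0); [intros j; lra|]. intros N; unfold sympart; rewrite zsum_const0; lra. Qed.

Lemma exZ_Rabs_le u v :
  (forall j, Rabs (u j) <= v j) -> exZ v -> exZ u /\ Rabs (sumZ u) <= sumZ v.
Proof.
  intros H E. destruct (exZ_le (fun j => Rabs (u j)) v) as [[A1 A2] Hle]; auto.
  { intros j; apply Rabs_pos. }
  split; [split; apply ex_series_Rabs; auto|].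
  unfold sumZ in *.
  pose proof (Series_Rabs _ A1). pose proof (Series_Rabs _ A2).
  pose proof (Rabs_triang (Series (fun n => u (Z.of_nat n))) (Series (fun n => u (- Z.of_nat (S n))%Z))).
  lra.
Qed.

(* Split [u] into its positive and negative parts to reduce to [sumZ_reflect_nonneg]. *)
Lemma sumZ_reflect u k : exZ (fun j => Rabs (u j)) -> sumZ (fun j => u (k - j)%Z) = sumZ u.
Proof.
  intros E.
  set (p := fun j => (Rabs (u j) + u j) / 2). set (m := fun j => (Rabs (u j) - u j) / 2).
  assert (Hp : nneg p) by (intros j; unfold p; split_Rabs; lra).
  assert (Hm : nneg m) by (intros j; unfold m; split_Rabs; lra).
  assert (Ep : exZ p) by (apply (exZ_le p (fun j => Rabs (u j))); auto; intros j; unfold p; split_Rabs; lra).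
  assert (Em : exZ m) by (apply (exZ_le m (fun j => Rabs (u j))); auto; intros j; unfold m; split_Rabs; lra).
  destruct (sumZ_reflect_nonneg p k Hp Ep) as [Ep' Hp'].
  destruct (sumZ_reflect_nonneg m k Hm Em) as [Em' Hm'].
  rewrite (sumZ_ext u (fun j => p j - m j)) by (intros; unfold p, m; field).
  rewrite (sumZ_ext (fun j => u (k - j)%Z) (fun j => p (k - j)%Z - m (k - j)%Z)) by (intros; unfold p, m; field).
  rewrite !sumZ_minus by auto. rewrite Hp', Hm'; auto.
Qed.

Lemma sumZ_zsum (F : Z -> Z -> R) a n : (forall k, exZ (F k)) ->
  exZ (fun j => zsum (fun k => F k j) a n) /\
  sumZ (fun j => zsum (fun k => F k j) a n) = zsum (fun k => sumZ (F k)) a n.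
Proof.
  intros H. induction n as [|n [E S]]; simpl.
  - split; [apply exZ_0|].
    rewrite (sumZ_ext _ (fun j => 0 * 0)) by (intros; ring). rewrite sumZ_scal. ring.
  - split; [apply exZ_plus; auto|]. rewrite sumZ_plus, S; auto.
Qed.

Lemma zsum_Cauchy_Schwarz (x y : Z -> R) a n :
  (zsum (fun j => x j * y j) a n) ^ 2 <= zsum (fun j => x j ^ 2) a n * zsum (fun j => y j ^ 2) a n.
Proof.
  set (A := zsum (fun j => x j ^ 2) a n). set (B := zsum (fun j => x j * y j) a n).
  set (C := zsum (fun j => y j ^ 2) a n).
  assert (Quad : forall P Q, 0 <= P ^ 2 * A - 2 * P * Q * B + Q ^ 2 * C).
  { intros P Q.
    replace (P ^ 2 * A - 2 * P * Q * B + Q ^ 2 * C) with (zsum (fun j => (P * x j - Q * y j) ^ 2) a n).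
    - apply zsum_nonneg; intros; apply pow2_ge_0.
    - rewrite (zsum_ext _ (fun j => P ^ 2 * x j ^ 2 + ((- (2 * P * Q)) * (x j * y j) + Q ^ 2 * y j ^ 2)))
        by (intros; ring).
      rewrite !zsum_plus, !zsum_scal. unfold A, B, C. ring. }
  assert (HA : 0 <= A) by (apply zsum_nonneg; intros; apply pow2_ge_0).
  assert (HC : 0 <= C) by (apply zsum_nonneg; intros; apply pow2_ge_0).
  pose proof (Quad C B) as Q1. pose proof (Quad B A) as Q2.
  pose proof (Quad 1 1) as Q3. pose proof (Quad 1 (-1)) as Q4.
  destruct (Rle_lt_or_eq_dec 0 C HC) as [Cp|C0].
  - apply Rmult_le_reg_l with C; auto. nra.
  - destruct (Rle_lt_or_eq_dec 0 A HA) as [Ap|A0].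
    + apply Rmult_le_reg_l with A; auto. nra.
    + rewrite <- C0, <- A0 in *. nra.
Qed.

Lemma sumZ_Cauchy_Schwarz (x y : Z -> R) :
  nneg x -> nneg y -> exZ (fun j => x j ^ 2) -> exZ (fun j => y j ^ 2) ->
  exZ (fun j => x j * y j) /\
  sumZ (fun j => x j * y j) <= sqrt (sumZ (fun j => x j ^ 2)) * sqrt (sumZ (fun j => y j ^ 2)).
Proof.
  intros Hx Hy Ex Ey.
  assert (Sx : 0 <= sumZ (fun j => x j ^ 2)) by (apply sumZ_nonneg; auto; intros j; nra).
  assert (Sy : 0 <= sumZ (fun j => y j ^ 2)) by (apply sumZ_nonneg; auto; intros j; nra).
  apply exZ_bounded_nonneg; [intros j; apply Rmult_le_pos; auto|].
  intros N. unfold sympart.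
  set (a := (- Z.of_nat (S N))%Z). set (n := (2 * S N)%nat).
  assert (Hxy : 0 <= zsum (fun j => x j * y j) a n) by (apply zsum_nonneg; intros j; apply Rmult_le_pos; auto).
  rewrite <- sqrt_mult by auto. rewrite <- (sqrt_pow2 _ Hxy). apply sqrt_le_1_alt.
  eapply Rle_trans; [apply zsum_Cauchy_Schwarz|]. apply Rmult_le_compat.
  - apply zsum_nonneg; intros; nra.
  - apply zsum_nonneg; intros; nra.
  - apply zsum_le_sumZ; auto; intros j; nra.
  - apply zsum_le_sumZ; auto; intros j; nra.
Qed.

Definition square_summable (x : Z -> R) := exZ (fun j => x j ^ 2).
Definition l2norm (x : Z -> R) := sqrt (sumZ (fun j => x j ^ 2)).

Lemma l2norm_nonneg x : 0 <= l2norm x.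
Proof. apply sqrt_pos. Qed.

Lemma l2norm_triangle (x y : Z -> R) : nneg x -> nneg y -> square_summable x -> square_summable y ->
  square_summable (fun j => x j + y j) /\ l2norm (fun j => x j + y j) <= l2norm x + l2norm y.
Proof.
  intros Hx Hy Ex Ey. destruct (sumZ_Cauchy_Schwarz x y Hx Hy Ex Ey) as [Exy Sxy].
  assert (Expand : forall j, (x j + y j) ^ 2 = x j ^ 2 + (2 * (x j * y j) + y j ^ 2)) by (intros; ring).
  assert (E2 : exZ (fun j => 2 * (x j * y j) + y j ^ 2)) by (apply exZ_plus; auto; apply exZ_scal; auto).
  split; [apply (exZ_ext _ _ (fun j => eq_sym (Expand j))), exZ_plus; auto|].
  unfold l2norm. rewrite (sumZ_ext _ _ Expand), sumZ_plus, sumZ_plus, sumZ_scal by (try apply exZ_scal; auto).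
  assert (P1 : 0 <= sumZ (fun j => x j ^ 2)) by (apply sumZ_nonneg; auto; intros j; nra).
  assert (P2 : 0 <= sumZ (fun j => y j ^ 2)) by (apply sumZ_nonneg; auto; intros j; nra).
  pose proof (sqrt_pos (sumZ (fun j => x j ^ 2))). pose proof (sqrt_pos (sumZ (fun j => y j ^ 2))).
  rewrite <- (sqrt_pow2 (sqrt (sumZ (fun j => x j ^ 2)) + sqrt (sumZ (fun j => y j ^ 2)))) by lra.
  apply sqrt_le_1_alt.
  replace ((sqrt (sumZ (fun j => x j ^ 2)) + sqrt (sumZ (fun j => y j ^ 2))) ^ 2) with
    (sqrt (sumZ (fun j => x j ^ 2)) ^ 2 + 2 * (sqrt (sumZ (fun j => x j ^ 2)) * sqrt (sumZ (fun j => y j ^ 2)))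
     + sqrt (sumZ (fun j => y j ^ 2)) ^ 2) by ring.
  rewrite !pow2_sqrt by auto. lra.
Qed.

Lemma l2norm_le (x z : Z -> R) : nneg z -> (forall j, z j <= x j) -> square_summable x ->
  square_summable z /\ l2norm z <= l2norm x.
Proof.
  intros Hz H E. destruct (exZ_le (fun j => z j ^ 2) (fun j => x j ^ 2)) as [E' S']; auto.
  - intros j; nra.
  - intros j; specialize (Hz j); specialize (H j); nra.
  - split; auto. apply sqrt_le_1_alt; auto.
Qed.

Lemma l2norm_scal (c : R) x : 0 <= c -> square_summable x ->
  square_summable (fun j => c * x j) /\ l2norm (fun j => c * x j) = c * l2norm x.
Proof.
  intros Hc E. split.
  - apply (exZ_ext (fun j => c ^ 2 * x j ^ 2)); [intros; ring|apply exZ_scal; auto].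
  - unfold l2norm. rewrite (sumZ_ext _ (fun j => c ^ 2 * x j ^ 2)) by (intros; ring).
    rewrite sumZ_scal, sqrt_mult_alt, sqrt_pow2 by (auto; nra). auto.
Qed.

Lemma l2norm_reflect x k : square_summable x ->
  square_summable (fun j => x (k - j)%Z) /\ l2norm (fun j => x (k - j)%Z) = l2norm x.
Proof.
  intros E. destruct (sumZ_reflect_nonneg (fun j => x j ^ 2) k) as [E' S']; auto.
  - intros j; nra.
  - split; auto. unfold l2norm; rewrite S'; auto.
Qed.

Lemma sumZ_sq_l2norm X : nneg X -> square_summable X -> sumZ (fun j => X j ^ 2) = l2norm X ^ 2.
Proof. intros H E. unfold l2norm. rewrite pow2_sqrt; auto. apply sumZ_nonneg; auto. intros j; apply pow2_ge_0. Qed.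

Lemma Rabs_fst_le_Cmod (z : C) : Rabs (fst z) <= Cmod z.
Proof. pose proof (Rmax_Cmod z). pose proof (Rmax_l (Rabs (fst z)) (Rabs (snd z))). lra. Qed.

Lemma Rabs_snd_le_Cmod (z : C) : Rabs (snd z) <= Cmod z.
Proof. pose proof (Rmax_Cmod z). pose proof (Rmax_r (Rabs (fst z)) (Rabs (snd z))). lra. Qed.

Lemma Cmod_le_Rabs_fst_snd (z : C) : Cmod z <= Rabs (fst z) + Rabs (snd z).
Proof.
  pose proof (Rabs_pos (fst z)). pose proof (Rabs_pos (snd z)).
  unfold Cmod. rewrite <- (sqrt_pow2 (Rabs (fst z) + Rabs (snd z))) by lra.
  apply sqrt_le_1_alt. rewrite <- (pow2_abs (fst z)), <- (pow2_abs (snd z)). nra.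
Qed.

Definition exC (u : Z -> C) := exZ (fun j => Cmod (u j)).

Lemma exC_le u (v : Z -> R) : (forall j, Cmod (u j) <= v j) -> exZ v -> exC u.
Proof. intros H E. apply (exZ_le _ v); auto. intros j; apply Cmod_ge_0. Qed.

Lemma exC_fst u : exC u -> exZ (fun j => fst (u j)).
Proof. intros E. apply (exZ_Rabs_le _ (fun j => Cmod (u j))); auto. intros; apply Rabs_fst_le_Cmod. Qed.

Lemma exC_snd u : exC u -> exZ (fun j => snd (u j)).
Proof. intros E. apply (exZ_Rabs_le _ (fun j => Cmod (u j))); auto. intros; apply Rabs_snd_le_Cmod. Qed.

Lemma Cmod_sumZC_le u : exC u -> Cmod (sumZC u) <= 2 * sumZ (fun j => Cmod (u j)).
Proof.
  intros E. eapply Rle_trans; [apply Cmod_le_Rabs_fst_snd|]. unfold sumZC; simpl.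
  destruct (exZ_Rabs_le (fun j => fst (u j)) (fun j => Cmod (u j))) as [_ H1]; auto.
  { intros; apply Rabs_fst_le_Cmod. }
  destruct (exZ_Rabs_le (fun j => snd (u j)) (fun j => Cmod (u j))) as [_ H2]; auto.
  { intros; apply Rabs_snd_le_Cmod. }
  lra.
Qed.

Lemma exC_ext u v : (forall j, u j = v j) -> exC u -> exC v.
Proof. intros H E. apply (exZ_ext (fun j => Cmod (u j))); auto. intros; rewrite H; auto. Qed.

Lemma exC_plus u v : exC u -> exC v -> exC (fun j => Cplus (u j) (v j)).
Proof.
  intros A B. apply (exC_le _ (fun j => Cmod (u j) + Cmod (v j))); [intros; apply Cmod_triangle|].
  apply exZ_plus; auto.
Qed.

Lemma exC_scal c u : exC u -> exC (fun j => Cmult c (u j)).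
Proof.
  intros A. apply (exC_le _ (fun j => Cmod c * Cmod (u j))); [intros; rewrite Cmod_mult; lra|].
  apply exZ_scal; auto.
Qed.

Lemma exC_minus u v : exC u -> exC v -> exC (fun j => Cminus (u j) (v j)).
Proof.
  intros A B. apply (exC_ext (fun j => Cplus (u j) (Cmult (RtoC (-1)) (v j)))); [intros; ring|].
  apply exC_plus, exC_scal; auto.
Qed.

Lemma exC_reflect u k : exC u -> exC (fun j => u (k - j)%Z).
Proof. intros A. apply (sumZ_reflect_nonneg (fun j => Cmod (u j)) k); auto. intros j; apply Cmod_ge_0. Qed.

Lemma sumZC_ext u v : (forall j, u j = v j) -> sumZC u = sumZC v.
Proof. intros H. unfold sumZC. f_equal; apply sumZ_ext; intros; rewrite H; auto. Qed.

Lemma sumZC_plus u v : exC u -> exC v -> sumZC (fun j => Cplus (u j) (v j)) = Cplus (sumZC u) (sumZC v).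
Proof.
  intros A B. unfold sumZC; simpl.
  rewrite (sumZ_plus (fun j => fst (u j))), (sumZ_plus (fun j => snd (u j)));
    auto using exC_fst, exC_snd.
Qed.

Lemma sumZC_scal c u : exC u -> sumZC (fun j => Cmult c (u j)) = Cmult c (sumZC u).
Proof.
  intros A. unfold sumZC; simpl.
  pose proof (exC_fst u A). pose proof (exC_snd u A).
  rewrite (sumZ_minus (fun k => fst c * fst (u k))), (sumZ_plus (fun k => fst c * snd (u k))), !sumZ_scal;
    try apply exZ_scal; auto.
Qed.

Lemma sumZC_minus u v : exC u -> exC v ->
  sumZC (fun j => Cminus (u j) (v j)) = Cminus (sumZC u) (sumZC v).
Proof.
  intros A B. rewrite (sumZC_ext _ (fun j => Cplus (u j) (Cmult (RtoC (-1)) (v j)))) by (intros; ring).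
  rewrite sumZC_plus, sumZC_scal by (try apply exC_scal; auto). ring.
Qed.

Lemma sumZC_reflect u k : exC u -> sumZC (fun j => u (k - j)%Z) = sumZC u.
Proof.
  intros A. unfold sumZC.
  rewrite (sumZ_reflect (fun j => fst (u j))), (sumZ_reflect (fun j => snd (u j))); auto.
  - apply (exZ_le _ (fun j => Cmod (u j))); auto; [intros j; apply Rabs_pos|intros; apply Rabs_snd_le_Cmod].
  - apply (exZ_le _ (fun j => Cmod (u j))); auto; [intros j; apply Rabs_pos|intros; apply Rabs_fst_le_Cmod].
Qed.

(** * The weight inequality *)

Lemma Rpower_pos x s : 0 < Rpower x s.
Proof. apply exp_pos. Qed.

Lemma Rpower_ge_1 x s : 1 <= x -> 0 <= s -> 1 <= Rpower x s.
Proof. intros. rewrite <- (Rpower_O x) by lra. apply Rle_Rpower; auto. Qed.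

Lemma sqrt_le_Rpower x s : 1 <= x -> 1/2 <= s -> sqrt x <= Rpower x s.
Proof.
  intros Hx Hs. rewrite <- Rpower_sqrt by lra. apply Rle_Rpower; lra.
Qed.

Lemma Rpower_le_mul4 x y s : 0 <= s -> 0 < x <= 4 * y -> Rpower x s <= Rpower 4 s * Rpower y s.
Proof. intros Hs Hxy. rewrite Rpower_mult_distr by lra. apply Rle_Rpower_l; lra. Qed.

Section FarWeight.
Variables (s J K L : R).
Hypotheses (Hs : 1/2 <= s) (HJ : 1 <= J) (HK : 1 <= K) (HKJ : K <= 4 * J) (HKL : K < L) (HJL : J <= 4 * L).

Lemma far_weight_le_small_exponent :
  s <= 1 -> Rpower K s * J <= 4 * sqrt K * (Rpower J s * Rpower L s).
Proof.
  intros Hs1.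
  assert (EK : Rpower K s = sqrt K * Rpower K (s - 1/2)).
  { rewrite <- Rpower_sqrt, <- Rpower_plus by lra. f_equal; field. }
  assert (EJ : J = Rpower J s * Rpower J (1 - s)).
  { rewrite <- Rpower_plus. replace (s + (1 - s)) with 1 by ring. rewrite Rpower_1; lra. }
  assert (HJ1 : Rpower J (1 - s) <= 4 * Rpower L (1 - s)).
  { eapply Rle_trans; [apply (Rpower_le_mul4 J L); lra|].
    apply Rmult_le_compat_r; [apply Rlt_le, Rpower_pos|].
    rewrite <- (Rpower_1 4) at 2 by lra. apply Rle_Rpower; lra. }
  assert (HKL1 : Rpower K (s - 1/2) * Rpower L (1 - s) <= Rpower L s).
  { apply Rle_trans with (Rpower L (s - 1/2) * Rpower L (1 - s)).
    - apply Rmult_le_compat_r; [apply Rlt_le, Rpower_pos|]. apply Rle_Rpower_l; lra.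
    - rewrite <- Rpower_plus. apply Rle_Rpower; lra. }
  pose proof (sqrt_pos K). pose proof (Rpower_pos J s). pose proof (Rpower_pos K (s - 1/2)).
  rewrite EK. pattern J at 1; rewrite EJ.
  apply Rle_trans with (sqrt K * Rpower J s * (4 * (Rpower K (s - 1/2) * Rpower L (1 - s)))).
  - replace (sqrt K * Rpower K (s - 1/2) * (Rpower J s * Rpower J (1 - s)))
      with (sqrt K * Rpower J s * (Rpower K (s - 1/2) * Rpower J (1 - s))) by ring.
    apply Rmult_le_compat_l; [nra|]. nra.
  - replace (4 * sqrt K * (Rpower J s * Rpower L s)) with (sqrt K * Rpower J s * (4 * Rpower L s)) by ring.
    apply Rmult_le_compat_l; nra.
Qed.

Lemma far_weight_le_large_exponent :
  1 < s -> Rpower K s * J <= Rpower 4 s * sqrt K * (Rpower J s * Rpower L s).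
Proof.
  intros Hs1.
  assert (EK : Rpower K s = K * Rpower K (s - 1)).
  { rewrite <- (Rpower_1 K) at 2 by lra. rewrite <- Rpower_plus. f_equal; ring. }
  assert (EJ : J * Rpower J (s - 1) = Rpower J s).
  { rewrite <- (Rpower_1 J) at 1 by lra. rewrite <- Rpower_plus. f_equal; ring. }
  assert (HK4 : Rpower K (s - 1) <= Rpower 4 s * Rpower J (s - 1)).
  { eapply Rle_trans; [apply (Rpower_le_mul4 K J); lra|].
    apply Rmult_le_compat_r; [apply Rlt_le, Rpower_pos|]. apply Rle_Rpower; lra. }
  assert (HsqK : sqrt K <= Rpower L s).
  { eapply Rle_trans; [apply sqrt_le_1_alt, Rlt_le, HKL|]. apply sqrt_le_Rpower; lra. }
  assert (EKK : K = sqrt K * sqrt K) by (rewrite sqrt_sqrt; lra).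
  pose proof (sqrt_pos K). pose proof (Rpower_pos J (s - 1)). pose proof (Rpower_pos 4 s).
  pose proof (Rpower_pos K (s - 1)).
  rewrite EK, <- EJ. rewrite EKK at 1.
  replace (Rpower 4 s * sqrt K * (J * Rpower J (s - 1) * Rpower L s))
    with (sqrt K * Rpower L s * (J * (Rpower 4 s * Rpower J (s - 1)))) by ring.
  replace (sqrt K * sqrt K * Rpower K (s - 1) * J)
    with (sqrt K * sqrt K * (J * Rpower K (s - 1))) by ring.
  apply Rmult_le_compat; try nra.
Qed.

Lemma far_weight_le : Rpower K s * J <= 4 * Rpower 4 s * sqrt K * (Rpower J s * Rpower L s).
Proof.
  pose proof (Rpower_ge_1 4 s ltac:(lra) ltac:(lra)).
  assert (0 <= sqrt K * (Rpower J s * Rpower L s))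
    by (pose proof (sqrt_pos K); pose proof (Rpower_pos J s); pose proof (Rpower_pos L s);
        apply Rmult_le_pos; nra).
  destruct (Rle_lt_dec s 1) as [Hs1|Hs1].
  - pose proof (far_weight_le_small_exponent Hs1). nra.
  - pose proof (far_weight_le_large_exponent Hs1). nra.
Qed.

End FarWeight.

Lemma weight_le_constant_part s J K L : 1/2 <= s -> 1 <= L -> 0 < K <= 4 * J ->
  Rpower K s <= Rpower 4 s * / sqrt L * (Rpower J s * Rpower L s).
Proof.
  intros Hs HL HKJ.
  assert (HsL : sqrt L <= Rpower L s) by (apply sqrt_le_Rpower; auto).
  assert (HsL0 : 0 < sqrt L) by (apply sqrt_lt_R0; lra).
  pose proof (Rpower_pos J s). pose proof (Rpower_pos 4 s).
  eapply Rle_trans; [apply (Rpower_le_mul4 K J); lra|].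
  replace (Rpower 4 s * / sqrt L * (Rpower J s * Rpower L s))
    with (Rpower 4 s * Rpower J s * (Rpower L s / sqrt L)) by (field; lra).
  rewrite <- (Rmult_1_r (Rpower 4 s * Rpower J s)) at 1.
  apply Rmult_le_compat_l; [nra|]. apply Rmult_le_reg_r with (sqrt L); [lra|].
  unfold Rdiv. rewrite Rmult_assoc, Rinv_l; lra.
Qed.

Lemma weight_le_quotient_part s J K L : 1/2 <= s -> 1 <= J -> 1 <= K -> 1 <= L ->
  K <= 4 * J -> J <= 2 * K + 2 * L ->
  Rpower K s * (4 * J / K) <= 16 * Rpower 4 s * (/ sqrt L + / sqrt K) * (Rpower J s * Rpower L s).
Proof.
  intros Hs HJ HK HL HKJ HJKL.
  pose proof (Rpower_pos J s). pose proof (Rpower_pos L s). pose proof (Rpower_pos K s).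
  assert (HX : 0 < Rpower J s * Rpower L s) by nra.
  assert (HiL : 0 < / sqrt L) by (apply Rinv_0_lt_compat, sqrt_lt_R0; lra).
  assert (HiK : 0 < / sqrt K) by (apply Rinv_0_lt_compat, sqrt_lt_R0; lra).
  pose proof (Rpower_pos 4 s).
  destruct (Rle_lt_dec L K) as [LK|LK].
  - assert (4 * J / K <= 16).
    { apply Rmult_le_reg_r with K; [lra|]. unfold Rdiv. rewrite Rmult_assoc, Rinv_l; lra. }
    pose proof (weight_le_constant_part s J K L Hs HL ltac:(lra)).
    apply Rle_trans with (16 * Rpower K s); [nra|].
    assert (0 <= Rpower 4 s * / sqrt K * (Rpower J s * Rpower L s)) by (apply Rmult_le_pos; nra).
    nra.
  - pose proof (far_weight_le s J K L Hs HJ HK HKJ LK ltac:(lra)) as Far.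
    assert (EK : sqrt K * sqrt K = K) by (apply sqrt_sqrt; lra).
    assert (HsK : 0 < sqrt K) by (apply sqrt_lt_R0; lra).
    apply Rle_trans with (16 * Rpower 4 s * / sqrt K * (Rpower J s * Rpower L s)).
    2: { assert (0 <= 16 * Rpower 4 s * / sqrt L * (Rpower J s * Rpower L s)) by (apply Rmult_le_pos; nra).
         replace (16 * Rpower 4 s * (/ sqrt L + / sqrt K) * (Rpower J s * Rpower L s))
           with (16 * Rpower 4 s * / sqrt L * (Rpower J s * Rpower L s)
                 + 16 * Rpower 4 s * / sqrt K * (Rpower J s * Rpower L s)) by ring.
         lra. }
    apply Rmult_le_reg_r with K; [lra|].
    replace (Rpower K s * (4 * J / K) * K) with (4 * (Rpower K s * J)) by (field; lra).
    assert (EK' : / sqrt K * K = sqrt K) by (rewrite <- EK at 2; field; lra).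
    replace (16 * Rpower 4 s * / sqrt K * (Rpower J s * Rpower L s) * K)
      with (4 * (4 * Rpower 4 s * (/ sqrt K * K) * (Rpower J s * Rpower L s))) by ring.
    rewrite EK'. lra.
Qed.

Definition alpha (x : R) := / sqrt (1 + x ^ 2).

Lemma alpha_pos x : 0 < alpha x.
Proof. apply Rinv_0_lt_compat, sqrt_lt_R0. pose proof (pow2_ge_0 x); lra. Qed.

(* The multiplier [1 + (j^2 + l^2)/k^2] of the bilinear terms costs two derivatives;
   they are recovered from the weights, at the price of a square-summable factor [alpha]. *)
Lemma weight_le (s j l k : R) : 1/2 <= s -> k = j + l -> 1 <= k ^ 2 -> l ^ 2 <= j ^ 2 ->
  Rpower (1 + k ^ 2) s * (1 + (j ^ 2 + l ^ 2) / k ^ 2) <=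
  17 * Rpower 4 s * (alpha l + alpha j + alpha k) * (Rpower (1 + j ^ 2) s * Rpower (1 + l ^ 2) s).
Proof.
  intros Hs Hk Hk1 Hlj.
  pose proof (alpha_pos j).
  assert (Hk0 : k <> 0) by (intros E; rewrite E in Hk1; lra).
  assert (HK : 1 <= 1 + k ^ 2) by lra.
  assert (HJ : 1 <= 1 + j ^ 2) by nra. assert (HL : 1 <= 1 + l ^ 2) by nra.
  assert (KJ : 1 + k ^ 2 <= 4 * (1 + j ^ 2)) by (subst k; pose proof (pow2_ge_0 (j - l)); nra).
  assert (JKL : 1 + j ^ 2 <= 2 * (1 + k ^ 2) + 2 * (1 + l ^ 2))
    by (subst k; pose proof (pow2_ge_0 (j + 2 * l)); nra).
  assert (W : (j ^ 2 + l ^ 2) / k ^ 2 <= 4 * (1 + j ^ 2) / (1 + k ^ 2)).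
  { apply Rmult_le_reg_r with (k ^ 2 * (1 + k ^ 2)); [nra|].
    replace ((j ^ 2 + l ^ 2) / k ^ 2 * (k ^ 2 * (1 + k ^ 2))) with ((j ^ 2 + l ^ 2) * (1 + k ^ 2))
      by (field; auto).
    replace (4 * (1 + j ^ 2) / (1 + k ^ 2) * (k ^ 2 * (1 + k ^ 2))) with (4 * (1 + j ^ 2) * k ^ 2)
      by (field; lra).
    nra. }
  pose proof (weight_le_constant_part s (1 + j ^ 2) (1 + k ^ 2) (1 + l ^ 2) Hs HL ltac:(lra)) as Near.
  pose proof (weight_le_quotient_part s _ _ _ Hs HJ HK HL KJ JKL) as Far.
  fold (alpha l) (alpha k) in Near, Far.
  set (X := Rpower (1 + j ^ 2) s * Rpower (1 + l ^ 2) s) in *.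
  assert (HX : 0 < X)
    by (unfold X; pose proof (Rpower_pos (1 + j ^ 2) s); pose proof (Rpower_pos (1 + l ^ 2) s); nra).
  pose proof (Rpower_pos 4 s). pose proof (Rpower_pos (1 + k ^ 2) s).
  assert (Rpower (1 + k ^ 2) s * ((j ^ 2 + l ^ 2) / k ^ 2) <= Rpower (1 + k ^ 2) s * (4 * (1 + j ^ 2) / (1 + k ^ 2)))
    by (apply Rmult_le_compat_l; lra).
  assert (0 <= Rpower 4 s * alpha j * X) by (apply Rmult_le_pos; [|lra]; apply Rmult_le_pos; lra).
  assert (0 <= Rpower 4 s * alpha k * X)
    by (apply Rmult_le_pos; [|lra]; apply Rmult_le_pos; [lra|apply Rlt_le, alpha_pos]).
  nra.
Qed.

Definition rho (r : R) (m : Z) := Rpower (1 + IZR m ^ 2) (r / 2).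
Definition wt (k j : Z) := 1 + (IZR j ^ 2 + IZR (k - j) ^ 2) / IZR k ^ 2.
Definition weight_const (r : R) := 17 * Rpower 4 (r / 2).
Definition alphaZ (m : Z) := alpha (IZR m).

Lemma rho_pos r m : 0 < rho r m.
Proof. apply Rpower_pos. Qed.

Lemma rho_opp r j : rho r (- j)%Z = rho r j.
Proof. unfold rho. rewrite opp_IZR. f_equal. ring. Qed.

Lemma sqrt_le_rho r j : 1 <= r -> sqrt (1 + IZR j ^ 2) <= rho r j.
Proof. intros Hr. apply sqrt_le_Rpower; [pose proof (pow2_ge_0 (IZR j)); lra|lra]. Qed.

Lemma weight_const_nonneg r : 0 <= weight_const r.
Proof. unfold weight_const. pose proof (Rpower_pos 4 (r / 2)). lra. Qed.

Lemma IZR_sq_ge_1 k : k <> 0%Z -> 1 <= IZR k ^ 2.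
Proof.
  intros Hk. destruct (Z_lt_le_dec 0 k) as [H|H].
  - assert (1 <= IZR k) by (apply IZR_le; lia). nra.
  - assert (IZR k <= -1) by (apply IZR_le; lia). nra.
Qed.

Lemma IZR_sq_pos k : k <> 0%Z -> 0 < IZR k ^ 2.
Proof. intros Hk; pose proof (IZR_sq_ge_1 k Hk); lra. Qed.

Lemma wt_ge_1 k j : k <> 0%Z -> 1 <= wt k j.
Proof.
  intros Hk. unfold wt. pose proof (IZR_sq_pos k Hk).
  assert (0 <= (IZR j ^ 2 + IZR (k - j) ^ 2) / IZR k ^ 2); [|lra].
  apply Rdiv_le_0_compat; [|lra]. pose proof (pow2_ge_0 (IZR j)); pose proof (pow2_ge_0 (IZR (k - j))); lra.
Qed.

Lemma rho_wt_le r k j : 1 <= r -> k <> 0%Z ->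
  rho r k * wt k j <= weight_const r * (alphaZ (k - j) + alphaZ j + alphaZ k) * (rho r j * rho r (k - j)).
Proof.
  intros Hr Hk. unfold rho, wt, alphaZ, weight_const. pose proof (IZR_sq_ge_1 k Hk).
  assert (Ek : IZR k = IZR j + IZR (k - j)) by (rewrite minus_IZR; ring).
  destruct (Rle_lt_dec (IZR (k - j) ^ 2) (IZR j ^ 2)) as [H1|H1].
  - apply weight_le; auto; lra.
  - rewrite (Rplus_comm (IZR j ^ 2)), (Rmult_comm (Rpower _ (r / 2)) (Rpower (1 + IZR (k - j) ^ 2) _)).
    replace (alpha (IZR (k - j)) + alpha (IZR j)) with (alpha (IZR j) + alpha (IZR (k - j))) by ring.
    apply weight_le; auto; lra.
Qed.

Lemma sum_n_inv_1_sq N : sum_n (fun n => / (1 + INR n ^ 2)) N <= 3 - 2 / (INR N + 1).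
Proof.
  induction N as [|N IH].
  - rewrite sum_O. simpl. replace (1 + 0 * (0 * 1)) with 1 by ring. lra.
  - rewrite sum_Sn, S_INR. change plus with Rplus.
    assert (0 <= INR N) by apply pos_INR.
    assert (/ (1 + (INR N + 1) ^ 2) <= 2 / (INR N + 1) - 2 / (INR N + 1 + 1)); [|lra].
    replace (2 / (INR N + 1) - 2 / (INR N + 1 + 1)) with (/ ((INR N + 1) * (INR N + 2) / 2)) by (field; lra).
    apply Rinv_le_contravar; [|nra]. apply Rmult_lt_0_compat; [|lra]. apply Rmult_lt_0_compat; lra.
Qed.

Lemma alpha_sq x : alpha x ^ 2 = / (1 + x ^ 2).
Proof.
  unfold alpha. assert (0 < 1 + x ^ 2) by nra.
  rewrite pow_inv, pow2_sqrt; lra.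
Qed.

Lemma alphaZ_square_summable : square_summable alphaZ /\ sumZ (fun m => alphaZ m ^ 2) <= 6.
Proof.
  apply exZ_bounded_nonneg; [intros m; apply pow2_ge_0|].
  intros N. rewrite sympart_split. unfold alphaZ.
  rewrite (sum_n_ext _ (fun n => / (1 + INR n ^ 2))) by (intros n; rewrite alpha_sq, <- INR_IZR_INZ; reflexivity).
  assert (sum_n (fun n => alpha (IZR (- Z.of_nat (S n))) ^ 2) N <= sum_n (fun n => / (1 + INR n ^ 2)) N).
  { apply sum_n_le_compat. intros n. rewrite alpha_sq, opp_IZR, <- INR_IZR_INZ, S_INR.
    pose proof (pos_INR n). apply Rinv_le_contravar; nra. }
  pose proof (sum_n_inv_1_sq N).
  assert (0 < 2 / (INR N + 1)) by (apply Rdiv_lt_0_compat; pose proof (pos_INR N); lra).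
  lra.
Qed.

(** * The weighted convolution estimate *)

Definition conv_sq (X Y : Z -> R) k := sumZ (fun j => (X j * Y (k - j)%Z) ^ 2).

Section ConvolutionOfSquares.
Variables X Y : Z -> R.
Hypotheses (HX : nneg X) (HY : nneg Y) (EX : square_summable X) (EY : square_summable Y).

Lemma conv_sq_le k :
  exZ (fun j => (X j * Y (k - j)%Z) ^ 2) /\ conv_sq X Y k <= l2norm X ^ 2 * l2norm Y ^ 2.
Proof.
  rewrite <- (sumZ_sq_l2norm X), <- (sumZ_sq_l2norm Y) by auto.
  destruct (exZ_le (fun j => (X j * Y (k - j)%Z) ^ 2) (fun j => sumZ (fun i => Y i ^ 2) * X j ^ 2)) as [E S].
  - intros j; apply pow2_ge_0.
  - intros j. rewrite Rpow_mult_distr, Rmult_comm. apply Rmult_le_compat_r; [apply pow2_ge_0|].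
    apply (le_sumZ (fun i => Y i ^ 2)); auto. intros i; apply pow2_ge_0.
  - apply exZ_scal; auto.
  - split; auto. unfold conv_sq. rewrite sumZ_scal in S. lra.
Qed.

(* Exchange the finite sum over [k] with the sum over [j]. *)
Lemma zsum_conv_sq_le a n : zsum (conv_sq X Y) a n <= l2norm X ^ 2 * l2norm Y ^ 2.
Proof.
  rewrite <- (sumZ_sq_l2norm X), <- (sumZ_sq_l2norm Y) by auto.
  destruct (sumZ_zsum (fun k j => (X j * Y (k - j)%Z) ^ 2) a n) as [E S].
  { intros k; apply conv_sq_le. }
  unfold conv_sq. rewrite <- S.
  destruct (exZ_le (fun j => zsum (fun k => (X j * Y (k - j)%Z) ^ 2) a n)
                   (fun j => sumZ (fun i => Y i ^ 2) * X j ^ 2)) as [_ S'].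
  - intros j; apply zsum_nonneg; intros; apply pow2_ge_0.
  - intros j. rewrite (zsum_ext _ (fun k => X j ^ 2 * Y (k - j)%Z ^ 2)) by (intros; apply Rpow_mult_distr).
    rewrite zsum_scal, Rmult_comm. apply Rmult_le_compat_r; [apply pow2_ge_0|].
    rewrite (zsum_translate (fun m => Y m ^ 2)). apply zsum_le_sumZ; auto. intros i; apply pow2_ge_0.
  - apply exZ_scal; auto.
  - rewrite sumZ_scal in S'. lra.
Qed.

Lemma sumZ_alpha_conv_le k :
  exZ (fun j => alphaZ (k - j)%Z * (X j * Y (k - j)%Z)) /\ exZ (fun j => alphaZ j * (X j * Y (k - j)%Z)) /\
  exZ (fun j => X j * Y (k - j)%Z) /\
  sumZ (fun j => alphaZ (k - j)%Z * (X j * Y (k - j)%Z)) + sumZ (fun j => alphaZ j * (X j * Y (k - j)%Z))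
  + alphaZ k * sumZ (fun j => X j * Y (k - j)%Z)
  <= 2 * (sqrt 6 * sqrt (conv_sq X Y k)) + alphaZ k * (l2norm X * l2norm Y).
Proof.
  assert (Ha : nneg alphaZ) by (intros m; apply Rlt_le, alpha_pos).
  destruct alphaZ_square_summable as [Ea Sa].
  set (P := fun j => X j * Y (k - j)%Z).
  assert (HP : nneg P) by (intros j; apply Rmult_le_pos; auto).
  destruct (conv_sq_le k) as [EP _].
  destruct (l2norm_reflect alphaZ k Ea) as [Ear Nar].
  destruct (l2norm_reflect Y k EY) as [EYr NYr].
  destruct (sumZ_Cauchy_Schwarz (fun j => alphaZ (k - j)%Z) P) as [C1e C1]; auto.
  { intros j; apply Ha. }
  destruct (sumZ_Cauchy_Schwarz alphaZ P) as [C2e C2]; auto.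
  destruct (sumZ_Cauchy_Schwarz X (fun j => Y (k - j)%Z)) as [C3e C3]; auto.
  { intros j; apply HY. }
  unfold l2norm in Nar, NYr. rewrite Nar in C1. rewrite NYr in C3.
  fold (l2norm X) (l2norm Y) in C3. change (sumZ (fun j => X j * Y (k - j)%Z)) with (sumZ P) in C3 |- *.
  change (sumZ (fun j => P j ^ 2)) with (conv_sq X Y k) in C1, C2.
  assert (sqrt (sumZ (fun m => alphaZ m ^ 2)) * sqrt (conv_sq X Y k) <= sqrt 6 * sqrt (conv_sq X Y k))
    by (apply Rmult_le_compat_r; [apply sqrt_pos|apply sqrt_le_1_alt; auto]).
  assert (alphaZ k * sumZ P <= alphaZ k * (l2norm X * l2norm Y)) by (apply Rmult_le_compat_l; auto).
  change (sumZ (fun j => alphaZ (k - j)%Z * (X j * Y (k - j)%Z))) with (sumZ (fun j => alphaZ (k - j)%Z * P j)).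
  change (sumZ (fun j => alphaZ j * (X j * Y (k - j)%Z))) with (sumZ (fun j => alphaZ j * P j)).
  split; [exact C1e|]. split; [exact C2e|]. split; [exact C3e|]. lra.
Qed.

End ConvolutionOfSquares.

Definition weighted (r : R) (x : Z -> R) (j : Z) := rho r j * x j.

Lemma weighted_nonneg r x : nneg x -> nneg (weighted r x).
Proof. intros Hx j. apply Rmult_le_pos; [apply Rlt_le, rho_pos|apply Hx]. Qed.

Definition wconv (x y : Z -> R) (k : Z) :=
  if Z.eqb k 0 then 0 else sumZ (fun j => wt k j * (x j * y (k - j)%Z)).

Section WeightedConvolution.
Variables (r : R) (x y : Z -> R).
Hypotheses (Hr : 1 <= r) (Hx : nneg x) (Hy : nneg y)
  (EX : square_summable (weighted r x)) (EY : square_summable (weighted r y)).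

Let X := weighted r x.
Let Y := weighted r y.

Lemma rho_sumZ_wt_le k : k <> 0%Z ->
  exZ (fun j => wt k j * (x j * y (k - j)%Z)) /\
  rho r k * sumZ (fun j => wt k j * (x j * y (k - j)%Z))
    <= weight_const r * (2 * (sqrt 6 * sqrt (conv_sq X Y k)) + alphaZ k * (l2norm X * l2norm Y)).
Proof.
  intros Hk.
  assert (HX : nneg X) by (apply weighted_nonneg; auto).
  assert (HY : nneg Y) by (apply weighted_nonneg; auto).
  destruct (sumZ_alpha_conv_le X Y HX HY EX EY k) as [E1 [E2 [E3 Hle]]].
  set (g := fun j => weight_const r
                     * (alphaZ (k - j)%Z * (X j * Y (k - j)%Z)
                        + (alphaZ j * (X j * Y (k - j)%Z) + alphaZ k * (X j * Y (k - j)%Z)))).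
  assert (Eg : exZ g) by (apply exZ_scal, exZ_plus, exZ_plus; auto; apply exZ_scal; auto).
  assert (Sg : sumZ g <= weight_const r * (2 * (sqrt 6 * sqrt (conv_sq X Y k)) + alphaZ k * (l2norm X * l2norm Y))).
  { unfold g. rewrite sumZ_scal, sumZ_plus, sumZ_plus, sumZ_scal by (try apply exZ_plus; try apply exZ_scal; auto).
    apply Rmult_le_compat_l; [apply weight_const_nonneg|lra]. }
  destruct (exZ_le (fun j => rho r k * (wt k j * (x j * y (k - j)%Z))) g) as [E S]; auto.
  - intros j. pose proof (rho_pos r k). pose proof (wt_ge_1 k j Hk). specialize (Hx j). specialize (Hy (k - j)%Z).
    apply Rmult_le_pos; [lra|]. apply Rmult_le_pos; [lra|]. apply Rmult_le_pos; auto.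
  - intros j. pose proof (rho_wt_le r k j Hr Hk) as W.
    assert (0 <= x j * y (k - j)%Z) by (apply Rmult_le_pos; auto).
    unfold g, X, Y, weighted.
    replace (rho r k * (wt k j * (x j * y (k - j)%Z))) with ((rho r k * wt k j) * (x j * y (k - j)%Z)) by ring.
    eapply Rle_trans; [apply Rmult_le_compat_r; [auto|apply W]|]. right; ring.
  - split.
    + apply (exZ_ext (fun j => / rho r k * (rho r k * (wt k j * (x j * y (k - j)%Z))))).
      { intros j. field. apply Rgt_not_eq, rho_pos. }
      apply exZ_scal; auto.
    + rewrite sumZ_scal in S. lra.
Qed.

Lemma wconv_nonneg : nneg (wconv x y).
Proof.
  intros k. unfold wconv. destruct (Z.eqb_spec k 0) as [|Hk]; [lra|].
  apply sumZ_nonneg; [|apply rho_sumZ_wt_le; auto].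
  intros j. pose proof (wt_ge_1 k j Hk). specialize (Hx j). specialize (Hy (k - j)%Z).
  apply Rmult_le_pos; [lra|]. apply Rmult_le_pos; auto.
Qed.

Lemma sq_weighted_wconv_le k :
  weighted r (wconv x y) k ^ 2 <=
  2 * weight_const r ^ 2 * (24 * conv_sq X Y k + alphaZ k ^ 2 * (l2norm X * l2norm Y) ^ 2).
Proof.
  assert (HX : nneg X) by (apply weighted_nonneg; auto).
  assert (HY : nneg Y) by (apply weighted_nonneg; auto).
  assert (HQ : 0 <= conv_sq X Y k) by (apply sumZ_nonneg; [intros j; apply pow2_ge_0|apply conv_sq_le; auto]).
  pose proof (pow2_ge_0 (weight_const r)). pose proof (pow2_ge_0 (alphaZ k)).
  pose proof (pow2_ge_0 (l2norm X * l2norm Y)).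
  unfold weighted. destruct (Z.eqb_spec k 0) as [Hk|Hk].
  - subst k. unfold wconv; simpl Z.eqb; cbv iota. rewrite Rmult_0_r, pow_i by lia.
    apply Rmult_le_pos; [lra|]. apply Rplus_le_le_0_compat; [lra|]. apply Rmult_le_pos; lra.
  - destruct (rho_sumZ_wt_le k Hk) as [_ B].
    pose proof (Rmult_le_pos _ _ (Rlt_le _ _ (rho_pos r k)) (wconv_nonneg k)) as Hpos.
    unfold wconv in *. destruct (Z.eqb_spec k 0) as [|_]; [lia|].
    set (u := sqrt 6 * sqrt (conv_sq X Y k)) in *. set (v := alphaZ k * (l2norm X * l2norm Y)) in *.
    assert (Hu : u ^ 2 = 6 * conv_sq X Y k) by (unfold u; rewrite Rpow_mult_distr, !pow2_sqrt; lra).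
    apply Rle_trans with ((weight_const r * (2 * u + v)) ^ 2); [apply pow_incr; auto|].
    replace (2 * weight_const r ^ 2 * (24 * conv_sq X Y k + alphaZ k ^ 2 * (l2norm X * l2norm Y) ^ 2))
      with (weight_const r ^ 2 * (2 * (4 * u ^ 2 + v ^ 2))) by (rewrite Hu; unfold v; ring).
    rewrite Rpow_mult_distr. apply Rmult_le_compat_l; auto.
    pose proof (pow2_ge_0 (2 * u - v)). nra.
Qed.

Lemma weighted_wconv_estimate :
  square_summable (weighted r (wconv x y)) /\
  l2norm (weighted r (wconv x y)) <= weight_const r * sqrt 60 * (l2norm X * l2norm Y).
Proof.
  assert (HX : nneg X) by (apply weighted_nonneg; auto).
  assert (HY : nneg Y) by (apply weighted_nonneg; auto).
  destruct alphaZ_square_summable as [Ea Sa].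
  set (NN := l2norm X * l2norm Y).
  assert (HNN : 0 <= NN) by (apply Rmult_le_pos; apply l2norm_nonneg).
  pose proof (pow2_ge_0 (weight_const r)). pose proof (pow2_ge_0 NN).
  destruct (exZ_bounded_nonneg (fun k => weighted r (wconv x y) k ^ 2) (60 * weight_const r ^ 2 * NN ^ 2)) as [E S].
  - intros k; apply pow2_ge_0.
  - intros N. unfold sympart. eapply Rle_trans; [apply zsum_le, sq_weighted_wconv_le|].
    rewrite zsum_scal, zsum_plus, zsum_scal.
    rewrite (zsum_ext (fun k => alphaZ k ^ 2 * NN ^ 2) (fun k => NN ^ 2 * alphaZ k ^ 2)) by (intros; ring).
    rewrite zsum_scal.
    pose proof (zsum_conv_sq_le X Y HX HY EX EY (- Z.of_nat (S N)) (2 * S N)).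
    pose proof (zsum_le_sumZ (fun k => alphaZ k ^ 2) (- Z.of_nat (S N)) (2 * S N)
                  ltac:(intros m; apply pow2_ge_0) Ea).
    replace (l2norm X ^ 2 * l2norm Y ^ 2) with (NN ^ 2) in * by (unfold NN; ring).
    replace (60 * weight_const r ^ 2 * NN ^ 2) with (2 * weight_const r ^ 2 * (24 * NN ^ 2 + NN ^ 2 * 6)) by ring.
    apply Rmult_le_compat_l; [lra|]. apply Rplus_le_compat; [lra|]. apply Rmult_le_compat_l; lra.
  - split; auto. unfold l2norm at 1.
    apply Rle_trans with (sqrt (60 * weight_const r ^ 2 * NN ^ 2)); [apply sqrt_le_1_alt; auto|].
    rewrite !sqrt_mult_alt, !sqrt_pow2 by (auto using weight_const_nonneg; nra).
    right; fold NN; ring.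
Qed.

End WeightedConvolution.

Lemma expi_plus a b : Cmult (expi a) (expi b) = expi (a + b).
Proof. unfold expi. apply injective_projections; simpl; [rewrite cos_plus|rewrite sin_plus]; ring. Qed.

Lemma Cmod_expi a : Cmod (expi a) = 1.
Proof.
  unfold Cmod, expi; cbn [fst snd]. rewrite <- sqrt_1. f_equal.
  pose proof (sin2_cos2 a) as H. unfold Rsqr in H. nra.
Qed.

Lemma Rabs_sin_le x : Rabs (sin x) <= Rabs x.
Proof.
  assert (Hpos : forall x, 0 <= x -> Rabs (sin x) <= x).
  { intros y Hy. destruct (Req_dec y 0) as [->|Hy0]; [rewrite sin_0, Rabs_R0; lra|].
    pose proof (sin_lt_x y ltac:(lra)). pose proof (SIN_bound y).
    destruct (Rle_lt_dec 1 y); [apply Rabs_le; lra|].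
    assert (0 < sin y) by (apply sin_gt_0; [lra|]; pose proof PI2_3_2; lra).
    rewrite Rabs_right; lra. }
  destruct (Rle_dec 0 x).
  - rewrite (Rabs_right x) by lra. apply Hpos; auto.
  - rewrite <- (Rabs_Ropp (sin x)), <- sin_neg, (Rabs_left x) by lra. apply Hpos; lra.
Qed.

(* [|e^{ia} - 1| = 2 |sin (a/2)|]. *)
Lemma Cmod_expi_sub_1 a : Cmod (Cminus (expi a) (RtoC 1)) <= Rabs a.
Proof.
  unfold Cmod, expi, Cminus, Cplus, Copp, RtoC; cbn [fst snd].
  replace ((cos a + - (1)) ^ 2 + (sin a + - 0) ^ 2) with ((2 * sin (a / 2)) ^ 2).
  - rewrite <- Rsqr_pow2, sqrt_Rsqr_abs, Rabs_mult, (Rabs_right 2) by lra.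
    pose proof (Rabs_sin_le (a / 2)).
    unfold Rdiv in *. rewrite Rabs_mult, (Rabs_right (/ 2)) in * by lra. lra.
  - replace (cos a) with (cos (2 * (a / 2))) by (f_equal; field).
    replace (sin a) with (sin (2 * (a / 2))) by (f_equal; field).
    rewrite cos_2a_sin, sin_2a. pose proof (sin2_cos2 (a / 2)) as H. unfold Rsqr in H. nra.
Qed.

Lemma Cmod_1_sub_expi a : Cmod (Cminus (RtoC 1) (expi a)) <= Rabs a.
Proof.
  replace (Cminus (RtoC 1) (expi a)) with (Copp (Cminus (expi a) (RtoC 1))) by ring.
  rewrite Cmod_opp. apply Cmod_expi_sub_1.
Qed.

Lemma Cmod_Ci_mult x : Cmod (Cmult Ci (RtoC x)) = Rabs x.
Proof. rewrite Cmod_mult, Cmod_Ci, Cmod_R. ring. Qed.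

Lemma Cmod_cpow z m : Cmod (cpow z m) = Cmod z ^ m.
Proof. induction m; simpl; [apply Cmod_1|]. rewrite Cmod_mult, IHm; auto. Qed.

Lemma cpow_neq_0 z m : z <> RtoC 0 -> cpow z m <> RtoC 0.
Proof.
  intros H E. apply (f_equal Cmod) in E. rewrite Cmod_cpow, Cmod_0 in E.
  apply Cmod_gt_0 in H. pose proof (pow_lt _ m H). lra.
Qed.

Definition ci (k : Z) : C := Cmult Ci (RtoC (IZR k)).

Lemma ci_neq_0 k : k <> 0%Z -> ci k <> RtoC 0.
Proof.
  intros Hk E. apply (f_equal Cmod) in E. unfold ci in E. rewrite Cmod_Ci_mult, Cmod_0 in E.
  apply Rabs_eq_0, eq_IZR_R0 in E. lia.
Qed.

Lemma cpow_ci_neq_0 m k : k <> 0%Z -> cpow (ci k) m <> RtoC 0.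
Proof. intros; apply cpow_neq_0, ci_neq_0; auto. Qed.

Lemma Cmod_cpow_ci m k : Cmod (cpow (ci k) m) = Rabs (IZR k) ^ m.
Proof. rewrite Cmod_cpow. unfold ci. rewrite Cmod_Ci_mult. auto. Qed.

Lemma dneg_neq_0 m h k : k <> 0%Z -> dneg m h k = Cdiv (h k) (cpow (ci k) m).
Proof. intros; unfold dneg; destruct (Z.eqb_spec k 0); [lia|reflexivity]. Qed.

Lemma Rabs_IZR_ge_1 j : j <> 0%Z -> 1 <= Rabs (IZR j).
Proof. intros H. rewrite <- abs_IZR. apply IZR_le. lia. Qed.

Lemma Cmod_fconj f j : Cmod (fconj f j) = Cmod (f (- j)%Z).
Proof. apply Cmod_conj. Qed.

Lemma Cmod_dpos m P j : Cmod (dpos m P j) = Rabs (IZR j) ^ m * Cmod (P j).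
Proof. unfold dpos. rewrite Cmod_mult, Cmod_cpow, Cmod_Ci_mult. auto. Qed.

Lemma Cmod_dneg_le m P j : Cmod (dneg m P j) <= Cmod (P j).
Proof.
  unfold dneg. destruct (Z.eqb_spec j 0) as [|Hj]; [rewrite Cmod_0; apply Cmod_ge_0|].
  unfold Cdiv. rewrite Cmod_mult, Cmod_inv, Cmod_cpow, Cmod_Ci_mult by (apply cpow_ci_neq_0; auto).
  pose proof (pow_R1_Rle _ m (Rabs_IZR_ge_1 j Hj)).
  rewrite <- (Rmult_1_r (Cmod (P j))) at 2. apply Rmult_le_compat_l; [apply Cmod_ge_0|].
  rewrite <- Rinv_1. apply Rinv_le_contravar; lra.
Qed.

Lemma Cmod_schr t P j : Cmod (schr t P j) = Cmod (P j).
Proof. unfold schr. rewrite Cmod_mult, Cmod_expi. ring. Qed.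

Definition mod_sym (f : Four) j := Cmod (f j) + Cmod (f (- j)%Z).

Lemma mod_sym_nonneg f : nneg (mod_sym f).
Proof. intros j; unfold mod_sym; pose proof (Cmod_ge_0 (f j)); pose proof (Cmod_ge_0 (f (- j)%Z)); lra. Qed.

(** [A] is built from [f] and its conjugate by multipliers of total order at most [a]. *)
Definition controlled (a : nat) (A f : Four) := forall j, Cmod (A j) <= Rabs (IZR j) ^ a * mod_sym f j.

Lemma controlled_id f : controlled 0 f f.
Proof. intros j. unfold mod_sym. simpl. pose proof (Cmod_ge_0 (f (- j)%Z)). lra. Qed.

Lemma controlled_fconj f : controlled 0 (fconj f) f.
Proof. intros j. unfold mod_sym. simpl. rewrite Cmod_fconj. pose proof (Cmod_ge_0 (f j)). lra. Qed.

Lemma controlled_schr a t P f : controlled a P f -> controlled a (schr t P) f.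
Proof. intros H j. rewrite Cmod_schr. apply H. Qed.

Lemma controlled_dneg a m P f : controlled a P f -> controlled a (dneg m P) f.
Proof. intros H j. eapply Rle_trans; [apply Cmod_dneg_le|apply H]. Qed.

Lemma controlled_dpos a m P f : controlled a P f -> controlled (m + a) (dpos m P) f.
Proof.
  intros H j. rewrite Cmod_dpos, pow_add, Rmult_assoc.
  apply Rmult_le_compat_l; [apply pow_le, Rabs_pos|apply H].
Qed.

(* Two derivatives shared by the two factors are absorbed by [1 + (j + l)^2]. *)
Lemma Rabs_pow_mul_le (a b : nat) (j l : R) : (a + b <= 2)%nat ->
  Rabs j ^ a * Rabs l ^ b <= 2 * (1 + (j + l) ^ 2) * (sqrt (1 + j ^ 2) * sqrt (1 + l ^ 2)).
Proof.
  intros Hab.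
  assert (Hsq : forall x, Rabs x <= sqrt (1 + x ^ 2) /\ 1 <= sqrt (1 + x ^ 2)).
  { intros x. split.
    - rewrite <- (sqrt_pow2 (Rabs x)) by apply Rabs_pos. apply sqrt_le_1_alt. rewrite pow2_abs. lra.
    - rewrite <- sqrt_1 at 1. apply sqrt_le_1_alt. pose proof (pow2_ge_0 x). lra. }
  destruct (Hsq j) as [J1 J0]. destruct (Hsq l) as [L1 L0].
  set (J := sqrt (1 + j ^ 2)) in *. set (L := sqrt (1 + l ^ 2)) in *.
  pose proof (Rabs_pos j). pose proof (Rabs_pos l).
  set (K := 1 + (j + l) ^ 2).
  assert (K1 : 1 <= K) by (unfold K; pose proof (pow2_ge_0 (j + l)); lra).
  assert (Kk : Rabs (j + l) <= K).
  { unfold K. rewrite <- (pow2_abs (j + l)). pose proof (pow2_ge_0 (Rabs (j + l) - 1)). nra. }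
  assert (JL : 1 <= J * L) by nra.
  destruct a as [|[|[|a]]]; destruct b as [|[|[|b]]]; simpl; try lia; try nra.
  - assert (Rabs l <= Rabs (j + l) + Rabs j) by (split_Rabs; lra).
    assert (Rabs l * (Rabs l * 1) <= L * (K + J)) by (rewrite Rmult_1_r; apply Rmult_le_compat; lra).
    assert (K * J * L >= J * L) by nra. assert (K * L >= L) by nra. nra.
  - assert (Rabs j <= Rabs (j + l) + Rabs l) by (split_Rabs; lra).
    assert (Rabs j * (Rabs j * 1) <= J * (K + L)) by (rewrite Rmult_1_r; apply Rmult_le_compat; lra).
    assert (K * J * L >= J * L) by nra. assert (K * J >= J) by nra. nra.
Qed.

Lemma Hs_weight_rho r k : Hs_weight r k = rho r k ^ 2.
Proof. unfold Hs_weight, rho. replace r with (r / 2 + r / 2) at 1 by field. rewrite Rpower_plus. ring. Qed.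

Lemma inH_square_summable r f : inH r f <-> square_summable (weighted r (fun j => Cmod (f j))).
Proof.
  split; intros H; (eapply exZ_ext; [|exact H]); intros j; unfold weighted; rewrite Hs_weight_rho; ring.
Qed.

Lemma normH_l2norm r f : normH r f = l2norm (weighted r (fun j => Cmod (f j))).
Proof. unfold normH, l2norm, weighted. f_equal. apply sumZ_ext. intros j; rewrite Hs_weight_rho; ring. Qed.

Lemma weighted_mod_sym_estimate r h : inH r h ->
  square_summable (weighted r (mod_sym h)) /\ l2norm (weighted r (mod_sym h)) <= 2 * normH r h.
Proof.
  intros H. apply inH_square_summable in H.
  set (F := weighted r (fun j => Cmod (h j))) in *.
  assert (HF : nneg F) by (apply weighted_nonneg; intros j; apply Cmod_ge_0).
  destruct (l2norm_reflect F 0%Z H) as [H' N'].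
  destruct (l2norm_triangle F (fun j => F (0 - j)%Z)) as [HM NM]; auto.
  { intros j; apply HF. }
  assert (E : forall j, F j + F (0 - j)%Z = weighted r (mod_sym h) j).
  { intros j. unfold F, weighted, mod_sym. replace (0 - j)%Z with (- j)%Z by lia. rewrite rho_opp. ring. }
  split; [eapply exZ_ext; [|exact HM]; intros j; simpl; rewrite E; auto|].
  rewrite normH_l2norm. fold F. unfold l2norm at 1.
  rewrite (sumZ_ext _ (fun j => (F j + F (0 - j)%Z) ^ 2)) by (intros; rewrite E; auto).
  fold (l2norm (fun j => F j + F (0 - j)%Z)). lra.
Qed.

Definition h1_mod_sym (f : Four) j := sqrt (1 + IZR j ^ 2) * mod_sym f j.

Lemma h1_mod_sym_square_summable r f : 1 <= r -> inH r f ->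
  nneg (h1_mod_sym f) /\ square_summable (h1_mod_sym f).
Proof.
  intros Hr H. destruct (weighted_mod_sym_estimate r f H) as [E _].
  assert (Hn : nneg (h1_mod_sym f)) by (intros j; apply Rmult_le_pos; [apply sqrt_pos|apply mod_sym_nonneg]).
  split; auto. apply (l2norm_le (weighted r (mod_sym f))); auto.
  intros j. apply Rmult_le_compat_r; [apply mod_sym_nonneg|apply sqrt_le_rho; auto].
Qed.

Lemma exC_controlled_product (A B f : Four) a b k r : 1 <= r -> inH r f -> (a + b <= 2)%nat ->
  controlled a A f -> controlled b B f -> exC (fun j => Cmult (A j) (B (k - j)%Z)).
Proof.
  intros Hr Hf Hab HA HB. destruct (h1_mod_sym_square_summable r f Hr Hf) as [En EL].
  destruct (l2norm_reflect (h1_mod_sym f) k EL) as [ELr _].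
  destruct (sumZ_Cauchy_Schwarz (h1_mod_sym f) (fun j => h1_mod_sym f (k - j)%Z)) as [Ec _]; auto.
  { intros j; apply En. }
  apply (exC_le _ (fun j => (2 * (1 + IZR k ^ 2)) * (h1_mod_sym f j * h1_mod_sym f (k - j)%Z)));
    [|apply exZ_scal; auto].
  intros j. rewrite Cmod_mult.
  pose proof (mod_sym_nonneg f j). pose proof (mod_sym_nonneg f (k - j)%Z).
  apply Rle_trans with ((Rabs (IZR j) ^ a * Rabs (IZR (k - j)) ^ b) * (mod_sym f j * mod_sym f (k - j)%Z)).
  { replace (Rabs (IZR j) ^ a * Rabs (IZR (k - j)) ^ b * (mod_sym f j * mod_sym f (k - j)%Z))
      with ((Rabs (IZR j) ^ a * mod_sym f j) * (Rabs (IZR (k - j)) ^ b * mod_sym f (k - j)%Z)) by ring.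
    apply Rmult_le_compat; auto using Cmod_ge_0. }
  pose proof (Rabs_pow_mul_le a b (IZR j) (IZR (k - j)) Hab) as Hp.
  replace (IZR j + IZR (k - j)) with (IZR k) in Hp by (rewrite minus_IZR; ring).
  unfold h1_mod_sym.
  replace (2 * (1 + IZR k ^ 2)
           * (sqrt (1 + IZR j ^ 2) * mod_sym f j * (sqrt (1 + IZR (k - j) ^ 2) * mod_sym f (k - j)%Z)))
    with ((2 * (1 + IZR k ^ 2) * (sqrt (1 + IZR j ^ 2) * sqrt (1 + IZR (k - j) ^ 2)))
          * (mod_sym f j * mod_sym f (k - j)%Z)) by ring.
  apply Rmult_le_compat_r; auto. apply Rmult_le_pos; auto.
Qed.

(** * The bracket terms as bilinear forms *)

Lemma Cmod_ihalf : Cmod ihalf = 1 / 2.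
Proof. unfold ihalf. rewrite Cmod_Ci_mult. apply Rabs_right; lra. Qed.

Lemma Cmod_2 : Cmod (RtoC 2) = 2.
Proof. rewrite Cmod_R. apply Rabs_right; lra. Qed.

Lemma wt_ge_frac k j : k <> 0%Z -> (IZR j ^ 2 + IZR (k - j) ^ 2) / IZR k ^ 2 <= wt k j.
Proof. intros; unfold wt; lra. Qed.

Lemma wt_ge_mul k j : k <> 0%Z -> 2 * (Rabs (IZR j) * Rabs (IZR (k - j))) / IZR k ^ 2 <= wt k j.
Proof.
  intros Hk. eapply Rle_trans; [|apply wt_ge_frac; auto]. pose proof (IZR_sq_pos k Hk).
  apply Rmult_le_compat_r; [apply Rlt_le, Rinv_0_lt_compat; lra|].
  rewrite <- (pow2_abs (IZR j)), <- (pow2_abs (IZR (k - j))).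
  pose proof (pow2_ge_0 (Rabs (IZR j) - Rabs (IZR (k - j)))). nra.
Qed.

Definition L1_symbol tau k j : C := if Z.eqb j 0 then RtoC 0 else
   Cmult (RtoC 2) (Cmult ihalf (Cmult (Cdiv (cpow (ci (k - j)) 2) (Cmult (cpow (ci k) 2) (cpow (ci j) 2)))
     (Cminus (RtoC 1) (expi (- (2*tau) * IZR j ^ 2))))).

Lemma L1_bilinear tau f k r : 1 <= r -> inH r f -> k <> 0%Z ->
  exC (fun j => Cmult (L1_symbol tau k j) (Cmult (fconj f j) (fconj f (k - j)%Z))) /\
  Cmult (RtoC 2) (L1 tau f k) = sumZC (fun j => Cmult (L1_symbol tau k j) (Cmult (fconj f j) (fconj f (k - j)%Z))).
Proof.
  intros Hr Hf Hk.
  set (F := fconj f).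
  set (A1 := schr (2*tau) (dneg 2 F)). set (B1 := dpos 2 F). set (A2 := dpos 2 F). set (B2 := dneg 2 F).
  assert (E1 : exC (fun j => Cmult (A1 j) (B1 (k - j)%Z))).
  { apply (exC_controlled_product A1 B1 f 0 2 k r); auto.
    - apply controlled_schr, controlled_dneg, controlled_fconj.
    - apply (controlled_dpos 0 2), controlled_fconj. }
  assert (E2 : exC (fun j => Cmult (A2 j) (B2 (k - j)%Z))).
  { apply (exC_controlled_product A2 B2 f 2 0 k r); auto.
    - apply (controlled_dpos 0 2), controlled_fconj.
    - apply controlled_dneg, controlled_fconj. }
  assert (R2 : forall j, Cmult (A2 (k - j)%Z) (B2 (k - (k - j))%Z) = Cmult (A2 (k - j)%Z) (B2 j)).
  { intros j. replace (k - (k - j))%Z with j by lia. auto. }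
  assert (E2r : exC (fun j => Cmult (A2 (k - j)%Z) (B2 j))).
  { apply (exC_ext _ _ R2). apply (exC_reflect (fun j => Cmult (A2 j) (B2 (k - j)%Z))); auto. }
  set (c1 := Cmult (RtoC 2) (Cdiv (Copp ihalf) (cpow (ci k) 2))).
  set (c2 := Cmult (RtoC 2) (Cdiv ihalf (cpow (ci k) 2))).
  assert (Hin : forall j, Cplus (Cmult c1 (Cmult (A1 j) (B1 (k - j)%Z))) (Cmult c2 (Cmult (A2 (k - j)%Z) (B2 j)))
      = Cmult (L1_symbol tau k j) (Cmult (F j) (F (k - j)%Z))).
  { intros j. unfold A1, B1, A2, B2, c1, c2, L1_symbol, schr, dpos, dneg.
    pose proof (cpow_ci_neq_0 2 k Hk).
    destruct (Z.eqb_spec j 0) as [|Hj]; [ring|].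
    pose proof (cpow_ci_neq_0 2 j Hj). fold (ci j) (ci (k - j)%Z). field. auto. }
  split.
  - apply (exC_ext _ _ Hin). apply exC_plus; apply exC_scal; auto.
  - rewrite <- (sumZC_ext _ _ Hin). rewrite sumZC_plus by (apply exC_scal; auto).
    rewrite !sumZC_scal by auto.
    rewrite <- (sumZC_ext _ _ R2), (sumZC_reflect (fun j => Cmult (A2 j) (B2 (k - j)%Z))) by auto.
    unfold L1, fadd, fscal. rewrite !dneg_neq_0 by auto. unfold fmul. unfold A1, B1, A2, B2, F.
    unfold c1, c2. pose proof (cpow_ci_neq_0 2 k Hk). field. auto.
Qed.

Lemma L1_symbol_le tau k j : 0 < tau -> k <> 0%Z -> Cmod (L1_symbol tau k j) <= 2 * tau * wt k j.
Proof.
  intros Ht Hk. pose proof (wt_ge_1 k j Hk). unfold L1_symbol.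
  destruct (Z.eqb_spec j 0) as [|Hj]; [rewrite Cmod_0; nra|].
  rewrite !Cmod_mult, Cmod_2, Cmod_ihalf, Cmod_div, Cmod_mult, !Cmod_cpow_ci, !pow2_abs
    by (apply Cmult_neq_0; apply cpow_ci_neq_0; auto).
  pose proof (IZR_sq_pos k Hk) as Hk2. pose proof (IZR_sq_pos j Hj) as Hj2.
  pose proof (not_0_IZR k Hk). pose proof (not_0_IZR j Hj).
  set (e := Cmod (Cminus (RtoC 1) (expi (- (2 * tau) * IZR j ^ 2)))).
  assert (He : e <= 2 * tau * IZR j ^ 2).
  { eapply Rle_trans; [apply Cmod_1_sub_expi|].
    rewrite Rabs_mult, Rabs_Ropp, !Rabs_right by (try apply Rle_ge, pow2_ge_0; lra). lra. }
  assert (Hwt : IZR (k - j) ^ 2 / IZR k ^ 2 <= wt k j).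
  { eapply Rle_trans; [|apply wt_ge_frac; auto]. pose proof (pow2_ge_0 (IZR j)).
    apply Rmult_le_compat_r; [apply Rlt_le, Rinv_0_lt_compat|]; lra. }
  set (A := IZR (k - j) ^ 2 / (IZR k ^ 2 * IZR j ^ 2)).
  assert (HA : 0 <= A) by (apply Rdiv_le_0_compat; [apply pow2_ge_0|nra]).
  replace (2 * (1 / 2 * (A * e))) with (A * e) by field.
  apply Rle_trans with (A * (2 * tau * IZR j ^ 2)); [apply Rmult_le_compat_l; auto|].
  replace (A * (2 * tau * IZR j ^ 2)) with (2 * tau * (IZR (k - j) ^ 2 / IZR k ^ 2)) by (unfold A; field; auto).
  apply Rmult_le_compat_l; lra.
Qed.

Definition L2_symbol tau k j : C :=
  Cmult (RtoC 2) (Cminus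
    (Cmult ihalf (Cmult (Cdiv (cpow (ci j) 1) (cpow (ci k) 3))
       (Cminus (RtoC 1) (expi (- tau * IZR k ^ 2 + - tau * IZR j ^ 2 + - - tau * IZR (k - j) ^ 2)))))
    (Cmult (RtoC tau) (Cdiv (cpow (ci j) 2) (cpow (ci k) 2)))).

Lemma L2_bilinear tau f k r : 1 <= r -> inH r f -> k <> 0%Z ->
  exC (fun j => Cmult (L2_symbol tau k j) (Cmult (fconj f j) (fconj f (k - j)%Z))) /\
  Cmult (RtoC 2) (L2 tau f k) = sumZC (fun j => Cmult (L2_symbol tau k j) (Cmult (fconj f j) (fconj f (k - j)%Z))).
Proof.
  intros Hr Hf Hk.
  set (F := fconj f).
  assert (E1 : exC (fun j => Cmult (schr tau (dpos 1 F) j) (schr (- tau) F (k - j)%Z))).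
  { apply (exC_controlled_product _ _ f 1 0 k r); auto.
    - apply controlled_schr, (controlled_dpos 0 1), controlled_fconj.
    - apply controlled_schr, controlled_fconj. }
  assert (E2 : exC (fun j => Cmult (dpos 1 F j) (F (k - j)%Z))).
  { apply (exC_controlled_product _ _ f 1 0 k r); auto.
    - apply (controlled_dpos 0 1), controlled_fconj.
    - apply controlled_fconj. }
  assert (E3 : exC (fun j => Cmult (dpos 2 F j) (F (k - j)%Z))).
  { apply (exC_controlled_product _ _ f 2 0 k r); auto.
    - apply (controlled_dpos 0 2), controlled_fconj.
    - apply controlled_fconj. }
  set (c1 := Cmult (RtoC 2) (Cdiv (Cmult (Copp ihalf) (expi (- tau * IZR k ^ 2))) (cpow (ci k) 3))).
  set (c2 := Cmult (RtoC 2) (Cdiv ihalf (cpow (ci k) 3))).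
  set (c3 := Cmult (RtoC 2) (Cdiv (Copp (RtoC tau)) (cpow (ci k) 2))).
  assert (Hin : forall j, Cplus (Cmult c1 (Cmult (schr tau (dpos 1 F) j) (schr (- tau) F (k - j)%Z)))
      (Cplus (Cmult c2 (Cmult (dpos 1 F j) (F (k - j)%Z))) (Cmult c3 (Cmult (dpos 2 F j) (F (k - j)%Z))))
      = Cmult (L2_symbol tau k j) (Cmult (F j) (F (k - j)%Z))).
  { intros j. unfold c1, c2, c3, L2_symbol, schr, dpos. rewrite <- !expi_plus.
    pose proof (cpow_ci_neq_0 2 k Hk). pose proof (cpow_ci_neq_0 3 k Hk). fold (ci j). field. auto. }
  split.
  - apply (exC_ext _ _ Hin). apply exC_plus. apply exC_scal; auto. apply exC_plus; apply exC_scal; auto.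
  - rewrite <- (sumZC_ext _ _ Hin). rewrite sumZC_plus, sumZC_plus, !sumZC_scal; auto.
    2-4: apply exC_scal; auto. 2: apply exC_plus; apply exC_scal; auto.
    unfold L2, fadd, fsub, fscal. unfold schr at 1. rewrite !dneg_neq_0 by auto. unfold fmul. fold F.
    unfold c1, c2, c3. pose proof (cpow_ci_neq_0 2 k Hk). pose proof (cpow_ci_neq_0 3 k Hk). field. auto.
Qed.

Lemma L2_symbol_le tau k j : 0 < tau -> k <> 0%Z -> Cmod (L2_symbol tau k j) <= 4 * tau * wt k j.
Proof.
  intros Ht Hk. unfold L2_symbol.
  set (th := - tau * IZR k ^ 2 + - tau * IZR j ^ 2 + - - tau * IZR (k - j) ^ 2).
  set (e := Cmod (Cminus (RtoC 1) (expi th))).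
  assert (He : e <= 2 * tau * (Rabs (IZR k) * Rabs (IZR j))).
  { eapply Rle_trans; [apply Cmod_1_sub_expi|].
    replace th with (- (2 * tau) * (IZR k * IZR j)) by (unfold th; rewrite minus_IZR; ring).
    rewrite Rabs_mult, Rabs_Ropp, (Rabs_right (2 * tau)), Rabs_mult by lra. lra. }
  unfold Cminus at 1. rewrite Cmod_mult, Cmod_2.
  eapply Rle_trans; [apply Rmult_le_compat_l; [lra|apply Cmod_triangle]|].
  rewrite Cmod_opp, !Cmod_mult, Cmod_ihalf, !Cmod_div, !Cmod_cpow_ci, Cmod_R by (apply cpow_ci_neq_0; auto).
  fold e. rewrite (Rabs_right tau) by lra.
  pose proof (IZR_sq_pos k Hk) as Hk2. pose proof (Rabs_pos (IZR j)).
  assert (Hak : 0 < Rabs (IZR k)) by (apply Rabs_pos_lt, not_0_IZR; auto).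
  assert (Hwt : IZR j ^ 2 / IZR k ^ 2 <= wt k j).
  { eapply Rle_trans; [|apply wt_ge_frac; auto]. pose proof (pow2_ge_0 (IZR (k - j))).
    apply Rmult_le_compat_r; [apply Rlt_le, Rinv_0_lt_compat|]; lra. }
  assert (H1 : 1 / 2 * (Rabs (IZR j) ^ 1 / Rabs (IZR k) ^ 3 * e) <= tau * (IZR j ^ 2 / IZR k ^ 2)).
  { apply Rle_trans with (1 / 2 * (Rabs (IZR j) ^ 1 / Rabs (IZR k) ^ 3 * (2 * tau * (Rabs (IZR k) * Rabs (IZR j))))).
    - apply Rmult_le_compat_l; [lra|]. apply Rmult_le_compat_l; auto.
      apply Rdiv_le_0_compat; [apply pow_le|apply pow_lt]; lra.
    - rewrite <- (pow2_abs (IZR j)), <- (pow2_abs (IZR k)). right. field. lra. }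
  rewrite !pow2_abs. nra.
Qed.

Definition L3_symbol tau k j : C :=
  Cmult (Copp Ci) (Cmult (Cdiv (Cminus (expi (- (2*tau) * IZR k ^ 2)) (RtoC 1)) (cpow (ci k) 4))
    (Cmult (cpow (ci j) 1) (cpow (ci (k - j)) 1))).

Lemma L3_bilinear tau f k r : 1 <= r -> inH r f -> k <> 0%Z ->
  exC (fun j => Cmult (L3_symbol tau k j) (Cmult (fconj f j) (fconj f (k - j)%Z))) /\
  L3 tau f k = sumZC (fun j => Cmult (L3_symbol tau k j) (Cmult (fconj f j) (fconj f (k - j)%Z))).
Proof.
  intros Hr Hf Hk.
  set (F := fconj f).
  assert (E1 : exC (fun j => Cmult (dpos 1 F j) (dpos 1 F (k - j)%Z))).
  { apply (exC_controlled_product _ _ f 1 1 k r); auto; apply (controlled_dpos 0 1), controlled_fconj. }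
  set (c1 := Cmult (Copp Ci) (Cdiv (Cminus (expi (- (2*tau) * IZR k ^ 2)) (RtoC 1)) (cpow (ci k) 4))).
  assert (Hin : forall j, Cmult c1 (Cmult (dpos 1 F j) (dpos 1 F (k - j)%Z))
      = Cmult (L3_symbol tau k j) (Cmult (F j) (F (k - j)%Z))).
  { intros j. unfold c1, L3_symbol, dpos. pose proof (cpow_ci_neq_0 4 k Hk).
    fold (ci j) (ci (k - j)%Z). field. auto. }
  split.
  - apply (exC_ext _ _ Hin). apply exC_scal; auto.
  - rewrite <- (sumZC_ext _ _ Hin). rewrite sumZC_scal; auto.
    unfold L3, fsub, fscal. rewrite !dneg_neq_0 by auto. unfold schr, fmul. fold F.
    unfold c1. pose proof (cpow_ci_neq_0 4 k Hk). field. auto.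
Qed.

Lemma L3_symbol_le tau k j : 0 < tau -> k <> 0%Z -> Cmod (L3_symbol tau k j) <= tau * wt k j.
Proof.
  intros Ht Hk. pose proof (wt_ge_mul k j Hk) as Hwt. unfold L3_symbol.
  rewrite !Cmod_mult, Cmod_opp, Cmod_Ci, Cmod_div, !Cmod_cpow_ci by (apply cpow_ci_neq_0; auto).
  set (e := Cmod (Cminus (expi (- (2 * tau) * IZR k ^ 2)) (RtoC 1))).
  assert (He : e <= 2 * tau * IZR k ^ 2).
  { eapply Rle_trans; [apply Cmod_expi_sub_1|].
    rewrite Rabs_mult, Rabs_Ropp, !Rabs_right by (try apply Rle_ge, pow2_ge_0; lra). lra. }
  pose proof (IZR_sq_pos k Hk) as Hk2. pose proof (not_0_IZR k Hk).
  set (P := Rabs (IZR j) ^ 1 * Rabs (IZR (k - j)) ^ 1).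
  assert (HP : 0 <= P) by (unfold P; apply Rmult_le_pos; apply pow_le, Rabs_pos).
  replace (Rabs (IZR k) ^ 4) with (IZR k ^ 2 * IZR k ^ 2) by (rewrite <- (pow2_abs (IZR k)); ring).
  apply Rle_trans with (2 * tau * IZR k ^ 2 / (IZR k ^ 2 * IZR k ^ 2) * P).
  - rewrite Rmult_1_l. apply Rmult_le_compat_r; auto.
    apply Rmult_le_compat_r; [apply Rlt_le, Rinv_0_lt_compat; nra|auto].
  - replace (2 * tau * IZR k ^ 2 / (IZR k ^ 2 * IZR k ^ 2) * P)
      with (tau * (2 * (Rabs (IZR j) * Rabs (IZR (k - j))) / IZR k ^ 2)) by (unfold P; field; auto).
    apply Rmult_le_compat_l; lra.
Qed.

Definition L4_symbol tau k j : C :=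
  Cminus (Cmult (Cdiv Ci (cpow (ci k) 2))
                (Cminus (expi (- - tau * IZR k ^ 2 + - tau * IZR j ^ 2 + - tau * IZR (k - j) ^ 2)) (RtoC 1)))
    (Cmult (RtoC (2*tau)) (Cdiv (Cmult (cpow (ci j) 1) (cpow (ci (k - j)) 1)) (cpow (ci k) 2))).

Lemma L4_bilinear tau f k r : 1 <= r -> inH r f -> k <> 0%Z ->
  exC (fun j => Cmult (L4_symbol tau k j) (Cmult (fconj f j) (fconj f (k - j)%Z))) /\
  L4 tau f k = sumZC (fun j => Cmult (L4_symbol tau k j) (Cmult (fconj f j) (fconj f (k - j)%Z))).
Proof.
  intros Hr Hf Hk.
  set (F := fconj f).
  assert (E1 : exC (fun j => Cmult (schr tau F j) (schr tau F (k - j)%Z))).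
  { apply (exC_controlled_product _ _ f 0 0 k r); auto; apply controlled_schr, controlled_fconj. }
  assert (E2 : exC (fun j => Cmult (F j) (F (k - j)%Z))).
  { apply (exC_controlled_product _ _ f 0 0 k r); auto; apply controlled_fconj. }
  assert (E3 : exC (fun j => Cmult (dpos 1 F j) (dpos 1 F (k - j)%Z))).
  { apply (exC_controlled_product _ _ f 1 1 k r); auto; apply (controlled_dpos 0 1), controlled_fconj. }
  set (c1 := Cdiv (Cmult Ci (expi (- - tau * IZR k ^ 2))) (cpow (ci k) 2)).
  set (c2 := Cdiv (Copp Ci) (cpow (ci k) 2)).
  set (c3 := Cdiv (Copp (RtoC (2 * tau))) (cpow (ci k) 2)).
  assert (Hin : forall j, Cplus (Cmult c1 (Cmult (schr tau F j) (schr tau F (k - j)%Z)))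
      (Cplus (Cmult c2 (Cmult (F j) (F (k - j)%Z))) (Cmult c3 (Cmult (dpos 1 F j) (dpos 1 F (k - j)%Z))))
      = Cmult (L4_symbol tau k j) (Cmult (F j) (F (k - j)%Z))).
  { intros j. unfold c1, c2, c3, L4_symbol, schr, dpos. rewrite <- !expi_plus.
    pose proof (cpow_ci_neq_0 2 k Hk). fold (ci j) (ci (k - j)%Z). field. auto. }
  split.
  - apply (exC_ext _ _ Hin). apply exC_plus. apply exC_scal; auto. apply exC_plus; apply exC_scal; auto.
  - rewrite <- (sumZC_ext _ _ Hin). rewrite sumZC_plus, sumZC_plus, !sumZC_scal; auto.
    2-4: apply exC_scal; auto. 2: apply exC_plus; apply exC_scal; auto.
    unfold L4, fsub, fscal. rewrite !dneg_neq_0 by auto. unfold schr at 1. unfold fmul. fold F.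
    unfold c1, c2, c3. pose proof (cpow_ci_neq_0 2 k Hk). field. auto.
Qed.

Lemma L4_symbol_le tau k j : 0 < tau -> k <> 0%Z -> Cmod (L4_symbol tau k j) <= 2 * tau * wt k j.
Proof.
  intros Ht Hk. pose proof (wt_ge_mul k j Hk) as Hwt. unfold L4_symbol.
  set (th := - - tau * IZR k ^ 2 + - tau * IZR j ^ 2 + - tau * IZR (k - j) ^ 2).
  set (P := Rabs (IZR j) * Rabs (IZR (k - j))).
  set (e := Cmod (Cminus (expi th) (RtoC 1))).
  assert (He : e <= 2 * tau * P).
  { eapply Rle_trans; [apply Cmod_expi_sub_1|].
    replace th with (2 * tau * (IZR j * IZR (k - j))) by (unfold th; rewrite minus_IZR; ring).
    rewrite Rabs_mult, (Rabs_right (2 * tau)), Rabs_mult by lra. unfold P; lra. }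
  unfold Cminus at 1. eapply Rle_trans; [apply Cmod_triangle|].
  rewrite Cmod_opp, !Cmod_mult, !Cmod_div, Cmod_Ci, Cmod_mult, !Cmod_cpow_ci, Cmod_R, !pow_1, pow2_abs
    by (apply cpow_ci_neq_0; auto).
  fold e P. rewrite (Rabs_right (2 * tau)) by lra.
  pose proof (IZR_sq_pos k Hk) as Hk2. pose proof (not_0_IZR k Hk).
  assert (e / IZR k ^ 2 <= 2 * tau * P / IZR k ^ 2)
    by (apply Rmult_le_compat_r; [apply Rlt_le, Rinv_0_lt_compat|]; lra).
  replace (1 / IZR k ^ 2 * e) with (e / IZR k ^ 2) by (field; auto).
  replace (2 * tau * (P / IZR k ^ 2)) with (2 * tau * P / IZR k ^ 2) by (field; auto).
  assert (tau * (2 * P / IZR k ^ 2) <= tau * wt k j) by (apply Rmult_le_compat_l; unfold P; lra).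
  lra.
Qed.

Definition I1_symbol tau k j : C :=
  if Z.eqb j 0 then RtoC 0 else if Z.eqb (k - j) 0 then RtoC 0 else
  Cmult ihalf (Cdiv (Cminus (RtoC 1) (expi (- tau * IZR k ^ 2 + - - tau * IZR j ^ 2 + - - tau * IZR (k - j) ^ 2)))
    (Cmult (cpow (ci j) 1) (cpow (ci (k - j)) 1))).

Lemma I1_bilinear tau f k r : 1 <= r -> inH r f -> k <> 0%Z ->
  exC (fun j => Cmult (I1_symbol tau k j) (Cmult (f j) (f (k - j)%Z))) /\
  I1 tau f k = sumZC (fun j => Cmult (I1_symbol tau k j) (Cmult (f j) (f (k - j)%Z))).
Proof.
  intros Hr Hf Hk.
  assert (E1 : exC (fun j => Cmult (dneg 1 f j) (dneg 1 f (k - j)%Z))).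
  { apply (exC_controlled_product _ _ f 0 0 k r); auto; apply controlled_dneg, controlled_id. }
  assert (E2 : exC (fun j => Cmult (schr (- tau) (dneg 1 f) j) (schr (- tau) (dneg 1 f) (k - j)%Z))).
  { apply (exC_controlled_product _ _ f 0 0 k r); auto; apply controlled_schr, controlled_dneg, controlled_id. }
  set (c1 := ihalf).
  set (c2 := Cmult (Copp ihalf) (expi (- tau * IZR k ^ 2))).
  assert (Hin : forall j, Cplus (Cmult c1 (Cmult (dneg 1 f j) (dneg 1 f (k - j)%Z)))
      (Cmult c2 (Cmult (schr (- tau) (dneg 1 f) j) (schr (- tau) (dneg 1 f) (k - j)%Z)))
      = Cmult (I1_symbol tau k j) (Cmult (f j) (f (k - j)%Z))).
  { intros j. unfold c1, c2, I1_symbol, schr, dneg. rewrite <- !expi_plus.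
    destruct (Z.eqb_spec j 0) as [|Hj]; [ring|]. destruct (Z.eqb_spec (k - j) 0) as [|Hkj]; [ring|].
    pose proof (cpow_ci_neq_0 1 j Hj). pose proof (cpow_ci_neq_0 1 (k - j) Hkj).
    fold (ci j) (ci (k - j)%Z). field. auto. }
  split.
  - apply (exC_ext _ _ Hin). apply exC_plus; apply exC_scal; auto.
  - rewrite <- (sumZC_ext _ _ Hin). rewrite sumZC_plus, !sumZC_scal; auto.
    2-3: apply exC_scal; auto.
    unfold I1, fsub, fscal. unfold schr at 1. unfold fmul.
    unfold c1, c2. ring.
Qed.

Lemma I1_symbol_le tau k j : 0 < tau -> k <> 0%Z -> Cmod (I1_symbol tau k j) <= tau * wt k j.
Proof.
  intros Ht Hk. pose proof (wt_ge_1 k j Hk). unfold I1_symbol.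
  destruct (Z.eqb_spec j 0) as [|Hj]; [rewrite Cmod_0; nra|].
  destruct (Z.eqb_spec (k - j) 0) as [|Hkj]; [rewrite Cmod_0; nra|].
  rewrite Cmod_mult, Cmod_ihalf, Cmod_div, Cmod_mult, !Cmod_cpow_ci, !pow_1
    by (apply Cmult_neq_0; apply cpow_ci_neq_0; auto).
  set (th := - tau * IZR k ^ 2 + - - tau * IZR j ^ 2 + - - tau * IZR (k - j) ^ 2).
  set (P := Rabs (IZR j) * Rabs (IZR (k - j))).
  assert (HP : 1 <= P) by (pose proof (Rabs_IZR_ge_1 j Hj); pose proof (Rabs_IZR_ge_1 (k - j) Hkj); unfold P; nra).
  assert (He : Cmod (Cminus (RtoC 1) (expi th)) <= 2 * tau * P).
  { eapply Rle_trans; [apply Cmod_1_sub_expi|].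
    replace th with (- (2 * tau) * (IZR j * IZR (k - j))) by (unfold th; rewrite minus_IZR; ring).
    rewrite Rabs_mult, Rabs_Ropp, (Rabs_right (2 * tau)), Rabs_mult by lra. unfold P; lra. }
  apply Rle_trans with (1 / 2 * (2 * tau * P / P)).
  - apply Rmult_le_compat_l; [lra|]. apply Rmult_le_compat_r; [apply Rlt_le, Rinv_0_lt_compat; lra|auto].
  - replace (1 / 2 * (2 * tau * P / P)) with tau by (field; lra). nra.
Qed.

Definition I2_symbol tau k j : C :=
  if Z.eqb (k - j) 0 then RtoC 0 else
  Cmult (RtoC 2) (Cmult ihalf
    (Cdiv (Cminus (RtoC 1) (expi (- tau * IZR k ^ 2 + - - tau * IZR j ^ 2 + - tau * IZR (k - j) ^ 2)))
    (Cmult (cpow (ci k) 1) (cpow (ci (k - j)) 1)))).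

Lemma I2_bilinear tau f k r : 1 <= r -> inH r f -> k <> 0%Z ->
  exC (fun j => Cmult (I2_symbol tau k j) (Cmult (f j) (fconj f (k - j)%Z))) /\
  Cmult (RtoC 2) (I2 tau f k) = sumZC (fun j => Cmult (I2_symbol tau k j) (Cmult (f j) (fconj f (k - j)%Z))).
Proof.
  intros Hr Hf Hk.
  set (F := fconj f).
  assert (E1 : exC (fun j => Cmult (schr (- tau) f j) (schr tau (dneg 1 F) (k - j)%Z))).
  { apply (exC_controlled_product _ _ f 0 0 k r); auto.
    - apply controlled_schr, controlled_id.
    - apply controlled_schr, controlled_dneg, controlled_fconj. }
  assert (E2 : exC (fun j => Cmult (f j) (dneg 1 F (k - j)%Z))).
  { apply (exC_controlled_product _ _ f 0 0 k r); auto.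
    - apply controlled_id.
    - apply controlled_dneg, controlled_fconj. }
  set (c1 := Cmult (RtoC 2) (Cdiv (Cmult (Copp ihalf) (expi (- tau * IZR k ^ 2))) (cpow (ci k) 1))).
  set (c2 := Cmult (RtoC 2) (Cdiv ihalf (cpow (ci k) 1))).
  assert (Hin : forall j, Cplus (Cmult c1 (Cmult (schr (- tau) f j) (schr tau (dneg 1 F) (k - j)%Z)))
      (Cmult c2 (Cmult (f j) (dneg 1 F (k - j)%Z)))
      = Cmult (I2_symbol tau k j) (Cmult (f j) (F (k - j)%Z))).
  { intros j. unfold c1, c2, I2_symbol, schr, dneg. rewrite <- !expi_plus.
    pose proof (cpow_ci_neq_0 1 k Hk).
    destruct (Z.eqb_spec (k - j) 0) as [|Hkj]; [ring|].
    pose proof (cpow_ci_neq_0 1 (k - j) Hkj). fold (ci (k - j)%Z). field. auto. }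
  split.
  - apply (exC_ext _ _ Hin). apply exC_plus; apply exC_scal; auto.
  - rewrite <- (sumZC_ext _ _ Hin). rewrite sumZC_plus, !sumZC_scal; auto.
    2-3: apply exC_scal; auto.
    unfold I2, fadd, fscal. unfold schr at 1. rewrite !dneg_neq_0 by auto. unfold fmul, fconst. fold F.
    destruct (Z.eqb_spec k 0); [lia|].
    unfold c1, c2. pose proof (cpow_ci_neq_0 1 k Hk). field. auto.
Qed.

Lemma I2_symbol_le tau k j : 0 < tau -> k <> 0%Z -> Cmod (I2_symbol tau k j) <= 2 * tau * wt k j.
Proof.
  intros Ht Hk. pose proof (wt_ge_1 k j Hk). unfold I2_symbol.
  destruct (Z.eqb_spec (k - j) 0) as [|Hkj]; [rewrite Cmod_0; nra|].
  rewrite !Cmod_mult, Cmod_2, Cmod_ihalf, Cmod_div, Cmod_mult, !Cmod_cpow_ci, !pow_1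
    by (apply Cmult_neq_0; apply cpow_ci_neq_0; auto).
  set (th := - tau * IZR k ^ 2 + - - tau * IZR j ^ 2 + - tau * IZR (k - j) ^ 2).
  set (P := Rabs (IZR k) * Rabs (IZR (k - j))).
  assert (HP : 1 <= P) by (pose proof (Rabs_IZR_ge_1 k Hk); pose proof (Rabs_IZR_ge_1 (k - j) Hkj); unfold P; nra).
  assert (He : Cmod (Cminus (RtoC 1) (expi th)) <= 2 * tau * P).
  { eapply Rle_trans; [apply Cmod_1_sub_expi|].
    replace th with (- (2 * tau) * (IZR k * IZR (k - j))) by (unfold th; rewrite minus_IZR; ring).
    rewrite Rabs_mult, Rabs_Ropp, (Rabs_right (2 * tau)), Rabs_mult by lra. unfold P; lra. }
  apply Rle_trans with (2 * (1 / 2 * (2 * tau * P / P))).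
  - do 2 (apply Rmult_le_compat_l; [lra|]).
    apply Rmult_le_compat_r; [apply Rlt_le, Rinv_0_lt_compat; lra|auto].
  - replace (2 * (1 / 2 * (2 * tau * P / P))) with (2 * tau) by (field; lra). nra.
Qed.

(** * The Lipschitz estimate *)

Lemma Cmod_bilinear_sub_le (Phi P Q P' Q' : Z -> C) (c : R) (D Lam : Z -> R) k : k <> 0%Z ->
  (forall j, Cmod (Phi j) <= c * wt k j) ->
  exC (fun j => Cmult (Phi j) (Cmult (P j) (Q (k - j)%Z))) ->
  exC (fun j => Cmult (Phi j) (Cmult (P' j) (Q' (k - j)%Z))) ->
  (forall j, Cmod (Cminus (P j) (P' j)) <= D j) -> (forall j, Cmod (Q j) <= Lam j) ->
  (forall j, Cmod (P' j) <= Lam j) -> (forall j, Cmod (Cminus (Q j) (Q' j)) <= D j) ->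
  exZ (fun j => wt k j * (D j * Lam (k - j)%Z)) -> exZ (fun j => wt k j * (Lam j * D (k - j)%Z)) ->
  Cmod (Cminus (sumZC (fun j => Cmult (Phi j) (Cmult (P j) (Q (k - j)%Z))))
               (sumZC (fun j => Cmult (Phi j) (Cmult (P' j) (Q' (k - j)%Z)))))
  <= 2 * c * (wconv D Lam k + wconv Lam D k).
Proof.
  intros Hk HPhi E1 E2 HP HQ HP' HQ' EDL ELD.
  unfold wconv. destruct (Z.eqb_spec k 0) as [|_]; [lia|].
  rewrite <- sumZC_minus by auto.
  eapply Rle_trans; [apply Cmod_sumZC_le, exC_minus; auto|].
  assert (Hc : forall j, 0 <= c * wt k j) by (intros j; eapply Rle_trans; [apply Cmod_ge_0|apply HPhi]).
  destruct (exZ_le (fun j => Cmod (Cminus (Cmult (Phi j) (Cmult (P j) (Q (k - j)%Z)))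
                                          (Cmult (Phi j) (Cmult (P' j) (Q' (k - j)%Z)))))
                   (fun j => c * (wt k j * (D j * Lam (k - j)%Z) + wt k j * (Lam j * D (k - j)%Z)))) as [_ S].
  - intros j; apply Cmod_ge_0.
  - intros j.
    replace (Cminus (Cmult (Phi j) (Cmult (P j) (Q (k - j)%Z))) (Cmult (Phi j) (Cmult (P' j) (Q' (k - j)%Z))))
      with (Cmult (Phi j) (Cplus (Cmult (Cminus (P j) (P' j)) (Q (k - j)%Z))
                                 (Cmult (P' j) (Cminus (Q (k - j)%Z) (Q' (k - j)%Z))))) by ring.
    rewrite Cmod_mult.
    replace (c * (wt k j * (D j * Lam (k - j)%Z) + wt k j * (Lam j * D (k - j)%Z)))
      with ((c * wt k j) * (D j * Lam (k - j)%Z + Lam j * D (k - j)%Z)) by ring.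
    apply Rmult_le_compat; auto using Cmod_ge_0.
    eapply Rle_trans; [apply Cmod_triangle|]. rewrite !Cmod_mult.
    apply Rplus_le_compat; apply Rmult_le_compat; auto using Cmod_ge_0.
  - apply exZ_scal, exZ_plus; auto.
  - rewrite sumZ_scal, sumZ_plus in S by auto. lra.
Qed.

Definition mod_sym_pair (f g : Four) j := mod_sym f j + mod_sym g j.

Lemma mod_sym_pair_nonneg f g : nneg (mod_sym_pair f g).
Proof. intros j. pose proof (mod_sym_nonneg f j). pose proof (mod_sym_nonneg g j). unfold mod_sym_pair. lra. Qed.

Lemma Cmod_sub_le_mod_sym f g j : Cmod (Cminus (f j) (g j)) <= mod_sym (fsub f g) j.
Proof. unfold mod_sym, fsub. pose proof (Cmod_ge_0 (Cminus (f (- j)%Z) (g (- j)%Z))). lra. Qed.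

Lemma Cmod_fconj_sub f g j : Cmod (Cminus (fconj f j) (fconj g j)) = Cmod (Cminus (f (- j)%Z) (g (- j)%Z)).
Proof.
  replace (Cminus (fconj f j) (fconj g j)) with (Cconj (Cminus (f (- j)%Z) (g (- j)%Z)))
    by (apply injective_projections; simpl; ring).
  apply Cmod_conj.
Qed.

Lemma Cmod_fconj_sub_le_mod_sym f g j : Cmod (Cminus (fconj f j) (fconj g j)) <= mod_sym (fsub f g) j.
Proof.
  rewrite Cmod_fconj_sub. unfold mod_sym, fsub. pose proof (Cmod_ge_0 (Cminus (f j) (g j))). lra.
Qed.

Lemma Cmod_le_mod_sym_pair_l f g j : Cmod (f j) <= mod_sym_pair f g j.
Proof.
  pose proof (Cmod_ge_0 (f (- j)%Z)). pose proof (mod_sym_nonneg g j).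
  unfold mod_sym_pair, mod_sym in *. lra.
Qed.

Lemma Cmod_le_mod_sym_pair_r f g j : Cmod (g j) <= mod_sym_pair f g j.
Proof.
  pose proof (Cmod_ge_0 (g (- j)%Z)). pose proof (mod_sym_nonneg f j).
  unfold mod_sym_pair, mod_sym in *. lra.
Qed.

Lemma Cmod_fconj_le_mod_sym_pair_l f g j : Cmod (fconj f j) <= mod_sym_pair f g j.
Proof.
  rewrite Cmod_fconj. pose proof (Cmod_ge_0 (f j)). pose proof (mod_sym_nonneg g j).
  unfold mod_sym_pair, mod_sym in *. lra.
Qed.

Lemma Cmod_fconj_le_mod_sym_pair_r f g j : Cmod (fconj g j) <= mod_sym_pair f g j.
Proof.
  rewrite Cmod_fconj. pose proof (Cmod_ge_0 (g j)). pose proof (mod_sym_nonneg f j).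
  unfold mod_sym_pair, mod_sym in *. lra.
Qed.

Definition bracket tau f : Four :=
  fadd (fscal (RtoC 2) (L1 tau f))
  (fadd (fscal (RtoC 2) (L2 tau f))
  (fadd (L3 tau f)
  (fadd (L4 tau f)
  (fadd (I1 tau f)
        (fscal (RtoC 2) (I2 tau f)))))).

Section BracketDifference.
Variables (tau r : R) (f g : Four) (k : Z).
Hypotheses (Hr : 1 <= r) (Ht : 0 < tau) (Hf : inH r f) (Hg : inH r g) (Hk : k <> 0%Z)
  (EDL : exZ (fun j => wt k j * (mod_sym (fsub f g) j * mod_sym_pair f g (k - j)%Z)))
  (ELD : exZ (fun j => wt k j * (mod_sym_pair f g j * mod_sym (fsub f g) (k - j)%Z))).

Let S := wconv (mod_sym (fsub f g)) (mod_sym_pair f g) k + wconv (mod_sym_pair f g) (mod_sym (fsub f g)) k.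

Ltac bound_group_difference sym_le form :=
  let Ef := fresh in let Eg := fresh in let Hf' := fresh in let Hg' := fresh in
  destruct (form tau f k r) as [Ef Hf']; auto; destruct (form tau g k r) as [Eg Hg']; auto;
  rewrite Hf', Hg'; apply (Cmod_bilinear_sub_le _ _ _ _ _ _ _ _ k Hk (fun j => sym_le tau k j Ht Hk) Ef Eg); auto.

Lemma Cmod_bracket_sub_le : Cmod (Cminus (bracket tau f k) (bracket tau g k)) <= 24 * tau * S.
Proof.
  pose proof (Cmod_sub_le_mod_sym f g) as Dfg. pose proof (Cmod_fconj_sub_le_mod_sym f g) as Dcfg.
  pose proof (Cmod_le_mod_sym_pair_l f g) as Lf. pose proof (Cmod_le_mod_sym_pair_r f g) as Lg.
  pose proof (Cmod_fconj_le_mod_sym_pair_l f g) as Lcf. pose proof (Cmod_fconj_le_mod_sym_pair_r f g) as Lcg.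
  assert (B1 : Cmod (Cminus (Cmult (RtoC 2) (L1 tau f k)) (Cmult (RtoC 2) (L1 tau g k))) <= 2 * (2 * tau) * S)
    by bound_group_difference L1_symbol_le L1_bilinear.
  assert (B2 : Cmod (Cminus (Cmult (RtoC 2) (L2 tau f k)) (Cmult (RtoC 2) (L2 tau g k))) <= 2 * (4 * tau) * S)
    by bound_group_difference L2_symbol_le L2_bilinear.
  assert (B3 : Cmod (Cminus (L3 tau f k) (L3 tau g k)) <= 2 * tau * S)
    by bound_group_difference L3_symbol_le L3_bilinear.
  assert (B4 : Cmod (Cminus (L4 tau f k) (L4 tau g k)) <= 2 * (2 * tau) * S)
    by bound_group_difference L4_symbol_le L4_bilinear.
  assert (B5 : Cmod (Cminus (I1 tau f k) (I1 tau g k)) <= 2 * tau * S)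
    by bound_group_difference I1_symbol_le I1_bilinear.
  assert (B6 : Cmod (Cminus (Cmult (RtoC 2) (I2 tau f k)) (Cmult (RtoC 2) (I2 tau g k))) <= 2 * (2 * tau) * S)
    by bound_group_difference I2_symbol_le I2_bilinear.
  unfold bracket, fadd, fscal.
  set (d1 := Cminus (Cmult (RtoC 2) (L1 tau f k)) (Cmult (RtoC 2) (L1 tau g k))) in *.
  set (d2 := Cminus (Cmult (RtoC 2) (L2 tau f k)) (Cmult (RtoC 2) (L2 tau g k))) in *.
  set (d3 := Cminus (L3 tau f k) (L3 tau g k)) in *.
  set (d4 := Cminus (L4 tau f k) (L4 tau g k)) in *.
  set (d5 := Cminus (I1 tau f k) (I1 tau g k)) in *.
  set (d6 := Cminus (Cmult (RtoC 2) (I2 tau f k)) (Cmult (RtoC 2) (I2 tau g k))) in *.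
  match goal with |- Cmod ?e <= _ =>
    replace e with (Cplus d1 (Cplus d2 (Cplus d3 (Cplus d4 (Cplus d5 d6)))))
      by (unfold d1, d2, d3, d4, d5, d6; ring) end.
  pose proof (Cmod_triangle d1 (Cplus d2 (Cplus d3 (Cplus d4 (Cplus d5 d6))))).
  pose proof (Cmod_triangle d2 (Cplus d3 (Cplus d4 (Cplus d5 d6)))).
  pose proof (Cmod_triangle d3 (Cplus d4 (Cplus d5 d6))).
  pose proof (Cmod_triangle d4 (Cplus d5 d6)).
  pose proof (Cmod_triangle d5 d6).
  lra.
Qed.

End BracketDifference.

Lemma Cmod_psi1_sym_le tau k : Cmod (psi1_sym tau k) <= 1.
Proof.
  unfold psi1_sym. destruct (Req_EM_T (- 2 * tau * IZR k ^ 2) 0) as [|Hy].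
  - rewrite Cmod_1; lra.
  - assert (Cmult Ci (RtoC (- 2 * tau * IZR k ^ 2)) <> RtoC 0).
    { intros E. apply (f_equal Cmod) in E. rewrite Cmod_Ci_mult, Cmod_0 in E. apply Rabs_eq_0 in E. auto. }
    rewrite Cmod_div, Cmod_Ci_mult by auto.
    pose proof (Cmod_expi_sub_1 (- 2 * tau * IZR k ^ 2)). pose proof (Rabs_pos_lt _ Hy).
    apply Rmult_le_reg_r with (Rabs (- 2 * tau * IZR k ^ 2)); auto.
    unfold Rdiv. rewrite Rmult_assoc, Rinv_l by lra. lra.
Qed.

Definition Btau_symbol tau k := Cmult (RtoC (- IZR k ^ 2 / omega k)) (expi (tau * omega k)).

Lemma Cmod_Btau_symbol_le tau k : k <> 0%Z -> Cmod (Btau_symbol tau k) <= 1.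
Proof.
  intros Hk. unfold Btau_symbol. rewrite Cmod_mult, Cmod_expi, Rmult_1_r, Cmod_R.
  pose proof (IZR_sq_pos k Hk).
  assert (Hom : IZR k ^ 2 <= omega k).
  { unfold omega. rewrite <- (sqrt_pow2 (IZR k ^ 2)) at 1 by apply pow2_ge_0.
    apply sqrt_le_1_alt. pose proof (pow2_ge_0 (IZR k ^ 2)). nra. }
  unfold Rdiv. rewrite Rabs_mult, Rabs_Ropp, Rabs_right, Rabs_right
    by (try apply Rle_ge, Rlt_le, Rinv_0_lt_compat; lra).
  apply Rmult_le_reg_r with (omega k); [lra|]. rewrite Rmult_assoc, Rinv_l by lra. lra.
Qed.

Lemma Psi1_sub_0 a b tn tau f g :
  fsub (Psi1 a b tn tau f) (Psi1 a b tn tau g) 0%Z = Cmult (expi (tau * omega 0)) (fsub f g 0%Z).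
Proof. unfold Psi1, fsub, fscal, Btau, Bop, eomega. cbn [Z.eqb]. ring. Qed.

Lemma Psi1_sub_eq a b tn tau f g k : k <> 0%Z ->
  fsub (Psi1 a b tn tau f) (Psi1 a b tn tau g) k =
  Cminus (Cminus (Cmult (expi (tau * omega k)) (fsub f g k))
                 (Cmult (Cmult (Cmult Ci (RtoC (1 / 4))) (Btau_symbol tau k))
                        (Cminus (bracket tau f k) (bracket tau g k))))
         (Cmult (Cmult (Cmult Ci (RtoC (tau * (a * tn + b)))) (Btau_symbol tau k))
                (Cplus (fsub f g k) (Cmult (psi1_sym tau k) (Cminus (fconj f k) (fconj g k))))).
Proof.
  intros Hk. unfold Psi1. fold (bracket tau f) (bracket tau g).
  unfold fsub, fscal, Btau, Bop, eomega, fadd, psi1op, Btau_symbol.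
  destruct (Z.eqb_spec k 0); [lia|]. ring.
Qed.

Lemma Cmod_Psi1_sub_le a b tn tau f g k : 0 < tau ->
  Cmod (fsub (Psi1 a b tn tau f) (Psi1 a b tn tau g) k) <=
  Cmod (fsub f g k) + tau * Rabs (a * tn + b) * mod_sym (fsub f g) k
  + (if Z.eqb k 0 then 0 else / 4 * Cmod (Cminus (bracket tau f k) (bracket tau g k))).
Proof.
  intros Ht.
  set (c := Rabs (a * tn + b)).
  assert (Hc : 0 <= tau * c) by (apply Rmult_le_pos; [lra|apply Rabs_pos]).
  pose proof (mod_sym_nonneg (fsub f g) k) as Hd.
  destruct (Z.eqb_spec k 0) as [->|Hk].
  - rewrite Psi1_sub_0, Cmod_mult, Cmod_expi. nra.
  - rewrite Psi1_sub_eq by auto.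
    set (be := Btau_symbol tau k). set (dX := Cminus (bracket tau f k) (bracket tau g k)).
    set (u := Cplus (fsub f g k) (Cmult (psi1_sym tau k) (Cminus (fconj f k) (fconj g k)))).
    assert (Hbe : Cmod be <= 1) by (apply Cmod_Btau_symbol_le; auto).
    assert (Hu : Cmod u <= mod_sym (fsub f g) k).
    { eapply Rle_trans; [apply Cmod_triangle|]. rewrite Cmod_mult, Cmod_fconj_sub.
      pose proof (Cmod_psi1_sym_le tau k). pose proof (Cmod_ge_0 (psi1_sym tau k)).
      pose proof (Cmod_ge_0 (fsub f g (- k)%Z)). unfold mod_sym, fsub in *. nra. }
    pose proof (Cmod_ge_0 be). pose proof (Cmod_ge_0 dX). pose proof (Cmod_ge_0 u).
    unfold Cminus at 1. eapply Rle_trans; [apply Cmod_triangle|]. rewrite Cmod_opp.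
    unfold Cminus at 1. eapply Rle_trans; [apply Rplus_le_compat_r, Cmod_triangle|]. rewrite Cmod_opp.
    rewrite !Cmod_mult, Cmod_expi, !Cmod_Ci, !Cmod_R, !Rmult_1_l.
    rewrite (Rabs_right (1 / 4)), Rabs_mult, (Rabs_right tau) by lra. fold c.
    assert (1 / 4 * Cmod be * Cmod dX <= / 4 * Cmod dX) by nra.
    assert (tau * c * Cmod be * Cmod u <= tau * c * mod_sym (fsub f g) k)
      by (rewrite Rmult_assoc; apply Rmult_le_compat_l; nra).
    lra.
Qed.

Lemma inH_fsub r f g : inH r f -> inH r g -> inH r (fsub f g).
Proof.
  rewrite !inH_square_summable. intros Hf Hg.
  apply (l2norm_le (fun j => weighted r (fun i => Cmod (f i)) j + weighted r (fun i => Cmod (g i)) j)).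
  - apply weighted_nonneg. intros j; apply Cmod_ge_0.
  - intros j. unfold weighted, fsub. rewrite <- Rmult_plus_distr_l.
    apply Rmult_le_compat_l; [apply Rlt_le, rho_pos|].
    unfold Cminus. eapply Rle_trans; [apply Cmod_triangle|]. rewrite Cmod_opp. lra.
  - apply l2norm_triangle; auto; apply weighted_nonneg; intros j; apply Cmod_ge_0.
Qed.

Lemma weighted_mod_sym_pair_estimate r f g : inH r f -> inH r g ->
  square_summable (weighted r (mod_sym_pair f g)) /\
  l2norm (weighted r (mod_sym_pair f g)) <= 2 * (normH r f + normH r g).
Proof.
  intros Hf Hg.
  destruct (weighted_mod_sym_estimate r f Hf) as [Ef Nf].
  destruct (weighted_mod_sym_estimate r g Hg) as [Eg Ng].
  destruct (l2norm_triangle (weighted r (mod_sym f)) (weighted r (mod_sym g))) as [E N]; auto;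
    try (apply weighted_nonneg, mod_sym_nonneg).
  assert (Eq : forall j, weighted r (mod_sym f) j + weighted r (mod_sym g) j = weighted r (mod_sym_pair f g) j)
    by (intros j; unfold weighted, mod_sym_pair; ring).
  split; [eapply exZ_ext; [|exact E]; intros j; simpl; rewrite Eq; auto|].
  unfold l2norm in *. rewrite (sumZ_ext _ _ (fun j => f_equal (fun x => x ^ 2) (eq_sym (Eq j)))). lra.
Qed.

Lemma l2norm_le_of_pointwise (v x y z1 z2 : Z -> R) (tau c : R) :
  0 <= tau -> 0 <= c -> nneg v -> nneg x -> nneg y -> nneg z1 -> nneg z2 ->
  square_summable x -> square_summable y -> square_summable z1 -> square_summable z2 ->
  (forall k, v k <= x k + tau * (c * y k + 6 * (z1 k + z2 k))) ->
  square_summable v /\ l2norm v <= l2norm x + tau * (c * l2norm y + 6 * (l2norm z1 + l2norm z2)).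
Proof.
  intros Ht Hc Hv Hx Hy Hz1 Hz2 Ex Ey Ez1 Ez2 Hle.
  destruct (l2norm_triangle z1 z2) as [E12 N12]; auto.
  assert (H12 : nneg (fun k => z1 k + z2 k)) by (intros k; specialize (Hz1 k); specialize (Hz2 k); lra).
  destruct (l2norm_scal 6 _ ltac:(lra) E12) as [E6 N6].
  destruct (l2norm_scal c y Hc Ey) as [Ec Nc].
  destruct (l2norm_triangle (fun k => c * y k) (fun k => 6 * (z1 k + z2 k))) as [Es Ns]; auto;
    try (intros k; apply Rmult_le_pos; auto; lra).
  destruct (l2norm_scal tau _ Ht Es) as [Et Nt].
  destruct (l2norm_triangle x (fun k => tau * (c * y k + 6 * (z1 k + z2 k)))) as [E N]; auto.
  { intros k; apply Rmult_le_pos; auto.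
    pose proof (Rmult_le_pos _ _ Hc (Hy k)). specialize (H12 k). simpl in H12. lra. }
  destruct (l2norm_le _ v Hv Hle E) as [Ev Nv].
  split; auto.
  assert (l2norm (fun k => c * y k + 6 * (z1 k + z2 k)) <= c * l2norm y + 6 * (l2norm z1 + l2norm z2)) by nra.
  assert (tau * l2norm (fun k => c * y k + 6 * (z1 k + z2 k)) <= tau * (c * l2norm y + 6 * (l2norm z1 + l2norm z2)))
    by (apply Rmult_le_compat_l; auto).
  lra.
Qed.

Section PsiDifference.
Variables (a b tn tau r : R) (f g : Four).
Hypotheses (Hr : 1 <= r) (Ht : 0 < tau) (Hf : inH r f) (Hg : inH r g).

Let D := mod_sym (fsub f g).
Let Lam := mod_sym_pair f g.

Lemma Cmod_Psi1_sub_le_wconv k :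
  Cmod (fsub (Psi1 a b tn tau f) (Psi1 a b tn tau g) k) <=
  Cmod (fsub f g k) + tau * (Rabs (a * tn + b) * D k + 6 * (wconv D Lam k + wconv Lam D k)).
Proof.
  destruct (weighted_mod_sym_estimate r _ (inH_fsub r f g Hf Hg)) as [ED _].
  destruct (weighted_mod_sym_pair_estimate r f g Hf Hg) as [EL _].
  assert (HD : nneg D) by apply mod_sym_nonneg.
  assert (HL : nneg Lam) by apply mod_sym_pair_nonneg.
  pose proof (Cmod_Psi1_sub_le a b tn tau f g k Ht) as Hpt.
  destruct (Z.eqb_spec k 0) as [Hk|Hk].
  - assert (E0 : Z.eqb k 0 = true) by (apply Z.eqb_eq; auto).
    unfold wconv, D. rewrite E0 in *. lra.
  - destruct (rho_sumZ_wt_le r D Lam Hr HD HL ED EL k Hk) as [EDL _].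
    destruct (rho_sumZ_wt_le r Lam D Hr HL HD EL ED k Hk) as [ELD _].
    pose proof (Cmod_bracket_sub_le tau r f g k Hr Ht Hf Hg Hk EDL ELD).
    unfold D, Lam. lra.
Qed.

Lemma weighted_Psi1_sub_le :
  square_summable (weighted r (fun k => Cmod (fsub (Psi1 a b tn tau f) (Psi1 a b tn tau g) k))) /\
  l2norm (weighted r (fun k => Cmod (fsub (Psi1 a b tn tau f) (Psi1 a b tn tau g) k))) <=
  l2norm (weighted r (fun k => Cmod (fsub f g k)))
  + tau * (Rabs (a * tn + b) * l2norm (weighted r D)
           + 6 * (l2norm (weighted r (wconv D Lam)) + l2norm (weighted r (wconv Lam D)))).
Proof.
  assert (Hd : inH r (fsub f g)) by (apply inH_fsub; auto).
  assert (HD : nneg D) by apply mod_sym_nonneg.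
  assert (HL : nneg Lam) by apply mod_sym_pair_nonneg.
  destruct (weighted_mod_sym_estimate r _ Hd) as [ED _].
  destruct (weighted_mod_sym_pair_estimate r f g Hf Hg) as [EL _].
  assert (Hmod : forall h : Four, nneg (weighted r (fun j => Cmod (h j))))
    by (intros h; apply weighted_nonneg; intros j; apply Cmod_ge_0).
  destruct (weighted_wconv_estimate r D Lam Hr HD HL ED EL) as [E1 _].
  destruct (weighted_wconv_estimate r Lam D Hr HL HD EL ED) as [E2 _].
  apply l2norm_le_of_pointwise.
  - lra.
  - apply Rabs_pos.
  - apply Hmod.
  - apply Hmod.
  - apply weighted_nonneg, HD.
  - apply weighted_nonneg, (wconv_nonneg r); auto.
  - apply weighted_nonneg, (wconv_nonneg r); auto.
  - apply inH_square_summable; auto.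
  - exact ED.
  - exact E1.
  - exact E2.
  - intros k. unfold weighted. pose proof (rho_pos r k).
    apply (Rle_trans _ (rho r k * (Cmod (fsub f g k)
             + tau * (Rabs (a * tn + b) * D k + 6 * (wconv D Lam k + wconv Lam D k))))).
    + apply Rmult_le_compat_l; [lra|apply Cmod_Psi1_sub_le_wconv].
    + right; ring.
Qed.

Lemma normH_Psi1_sub_le :
  inH r (fsub (Psi1 a b tn tau f) (Psi1 a b tn tau g)) /\
  normH r (fsub (Psi1 a b tn tau f) (Psi1 a b tn tau g)) <=
  (1 + tau * (2 * Rabs (a * tn + b) + 48 * weight_const r * sqrt 60 * (normH r f + normH r g)))
  * normH r (fsub f g).
Proof.
  set (c := Rabs (a * tn + b)). set (C := weight_const r * sqrt 60).
  assert (Hc : 0 <= c) by apply Rabs_pos.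
  assert (HC : 0 <= C) by (apply Rmult_le_pos; [apply weight_const_nonneg|apply sqrt_pos]).
  assert (HD : nneg D) by apply mod_sym_nonneg.
  assert (HL : nneg Lam) by apply mod_sym_pair_nonneg.
  destruct (weighted_mod_sym_estimate r _ (inH_fsub r f g Hf Hg)) as [ED ND].
  destruct (weighted_mod_sym_pair_estimate r f g Hf Hg) as [EL NL].
  destruct (weighted_wconv_estimate r D Lam Hr HD HL ED EL) as [_ N1].
  destruct (weighted_wconv_estimate r Lam D Hr HL HD EL ED) as [_ N2].
  destruct weighted_Psi1_sub_le as [Ev Nv].
  split; [apply inH_square_summable; auto|].
  rewrite !normH_l2norm in *. fold c C in Nv, N1, N2.
  set (nd := l2norm (weighted r (fun j => Cmod (fsub f g j)))) in *.
  set (nfg := l2norm (weighted r (fun j => Cmod (f j))) + l2norm (weighted r (fun j => Cmod (g j)))) in *.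
  pose proof (l2norm_nonneg (weighted r D)). pose proof (l2norm_nonneg (weighted r Lam)).
  assert (Hz : l2norm (weighted r (wconv D Lam)) + l2norm (weighted r (wconv Lam D)) <= 8 * C * nfg * nd).
  { assert (l2norm (weighted r D) * l2norm (weighted r Lam) <= (2 * nd) * (2 * nfg))
      by (apply Rmult_le_compat; auto).
    rewrite (Rmult_comm (l2norm (weighted r Lam))) in N2. nra. }
  assert (c * l2norm (weighted r D) <= c * (2 * nd)) by (apply Rmult_le_compat_l; auto).
  assert (tau * (c * l2norm (weighted r D)
                 + 6 * (l2norm (weighted r (wconv D Lam)) + l2norm (weighted r (wconv Lam D))))
          <= tau * (c * (2 * nd) + 6 * (8 * C * nfg * nd))) by (apply Rmult_le_compat_l; lra).
  replace (48 * weight_const r * sqrt 60) with (48 * C) by (unfold C; ring).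
  replace ((1 + tau * (2 * c + 48 * C * nfg)) * nd) with (nd + tau * (c * (2 * nd) + 6 * (8 * C * nfg * nd)))
    by ring.
  lra.
Qed.

End PsiDifference.

Theorem lemma9 :
  forall (a b tn : R), 0 <= tn ->
  forall (r : R), 1 <= r ->
  forall (K : R), exists M : R,
  forall (f g : Four) (tau : R),
    inH r f -> inH r g -> normH r f + normH r g <= K -> 0 < tau ->
    inH r (fsub (Psi1 a b tn tau f) (Psi1 a b tn tau g)) /\
    normH r (fsub (Psi1 a b tn tau f) (Psi1 a b tn tau g))
      <= (1 + M * tau) * normH r (fsub f g).
Proof.
  intros a b tn _ r Hr K.
  exists (2 * Rabs (a * tn + b) + 48 * weight_const r * sqrt 60 * K).
  intros f g tau Hf Hg HK Ht.
  destruct (normH_Psi1_sub_le a b tn tau r f g Hr Ht Hf Hg) as [Hin Hle].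
  split; auto.
  eapply Rle_trans; [exact Hle|].
  apply Rmult_le_compat_r; [rewrite normH_l2norm; apply l2norm_nonneg|].
  set (X := 48 * weight_const r * sqrt 60).
  assert (HX : 0 <= X) by (unfold X; pose proof (weight_const_nonneg r); pose proof (sqrt_pos 60); nra).
  assert (X * (normH r f + normH r g) <= X * K) by (apply Rmult_le_compat_l; auto).
  assert (tau * (X * (normH r f + normH r g)) <= tau * (X * K)) by (apply Rmult_le_compat_l; lra).
  nra.
Qed.
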